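(* Let $f,g:S^2\to S^2$ be orientation-preserving homeomorphisms and let $\{x_1,x_2,x_3,x_4\}$ be a set of four distinct points contained in $\mathrm{Fix}(f)\cap\mathrm{Fix}(g)$. Then $$\mathcal R_{fg}(x_1,x_2,x_3,x_4)=\mathcal R_f(x_1,x_2,x_3,x_4)+\mathcal R_g(x_1,x_2,x_3,x_4),$$ where $fg=f\circ g$.
   Context: For distinct points $x_1,x_2,x_3,x_4\in S^2$ put $A=\{x_1,x_2\}$, $B=\{x_3,x_4\}$. For an oriented path $\alpha:[0,1]\to S^2\setminus B$ from $x_1$ to $x_2$ and an oriented path $\beta:[0,1]\to S^2\setminus A$ from $x_3$ to $x_4$, the algebraic intersection number $\alpha\cdot\beta\in\mathbb Z$ is defined by $[\delta*\beta]=(\alpha\cdot\beta)[u]$ in $H_1(S^2\setminus A)\cong\mathbb Z$, where $\delta$ is any path from $x_4$ to $x_3$ disjoint from the image of $\alpha$, $\delta*\beta$ is the closed loop obtained by concatenating $\delta$ and $\beta$, and $u$ is an embedded closed loop in $S^2\setminus A$ positively oriented with respect to $x_1$ (so $[u]$ generates $H_1(S^2\setminus A)$); this does not depend on $\delta$. For an orientation-preserving homeomorphism $f$ of $S^2$ with $x_1,\dots,x_4$ distinct fixed points, $\mathcal R_f(x_1,x_2,x_3,x_4)=\alpha\cdot(f\circ\beta)-\alpha\cdot\beta$, which is independent of the choice of such $\alpha,\beta$. *)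

From Stdlib Require Import Reals ZArith.
Open Scope R_scope.

Definition pt : Type := (R * R * R)%type.

Definition vadd (p q : pt) : pt :=
  let '(a1, a2, a3) := p in let '(b1, b2, b3) := q in (a1 + b1, a2 + b2, a3 + b3).
Definition vscale (c : R) (p : pt) : pt :=
  let '(a1, a2, a3) := p in (c * a1, c * a2, c * a3).
Definition vsub (p q : pt) : pt := vadd p (vscale (-1) q).
Definition dot (p q : pt) : R :=
  let '(a1, a2, a3) := p in let '(b1, b2, b3) := q in a1 * b1 + a2 * b2 + a3 * b3.
Definition cross (p q : pt) : pt :=
  let '(a1, a2, a3) := p in let '(b1, b2, b3) := q in
  (a2 * b3 - a3 * b2, a3 * b1 - a1 * b3, a1 * b2 - a2 * b1).
Definition vnorm (p : pt) : R := sqrt (dot p p).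
Definition dist3 (p q : pt) : R := vnorm (vsub p q).

Definition on_S2 (p : pt) : Prop := dot p p = 1.

Definition cont_on_S2 (f : pt -> pt) : Prop :=
  forall x, on_S2 x -> forall eps, eps > 0 -> exists del, del > 0 /\
    forall y, on_S2 y -> dist3 x y < del -> dist3 (f x) (f y) < eps.

Definition homeo_S2 (f : pt -> pt) : Prop :=
  (forall x, on_S2 x -> on_S2 (f x)) /\ cont_on_S2 f /\
  exists g : pt -> pt,
    (forall x, on_S2 x -> on_S2 (g x)) /\ cont_on_S2 g /\
    (forall x, on_S2 x -> g (f x) = x) /\ (forall x, on_S2 x -> f (g x) = x).

Definition unit_int (t : R) : Prop := 0 <= t <= 1.

Definition is_path (γ : R -> pt) : Prop :=
  (forall t, unit_int t -> on_S2 (γ t)) /\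
  forall t, unit_int t -> forall eps, eps > 0 -> exists del, del > 0 /\
    forall s, unit_int s -> Rabs (s - t) < del -> dist3 (γ t) (γ s) < eps.

Definition avoids (γ : R -> pt) (x : pt) : Prop := forall t, unit_int t -> γ t <> x.

Definition real_cont01 (θ : R -> R) : Prop :=
  forall t, unit_int t -> forall eps, eps > 0 -> exists del, del > 0 /\
    forall s, unit_int s -> Rabs (s - t) < del -> Rabs (θ t - θ s) < eps.

Definition concat (δ β : R -> pt) : R -> pt :=
  fun t => if Rle_dec t (1/2) then δ (2 * t) else β (2 * t - 1).

(* ---------- H_1(S^2 \ {a,b}) via winding numbers ----------
   stereographic projection from b onto the plane b^⊥, then translate so that
   (the image of) a is at the origin. *)
Definition stereo (b p : pt) : pt :=
  vscale (/ (1 - dot p b)) (vsub p (vscale (dot p b) b)).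
Definition Fab (a b p : pt) : pt := vsub (stereo b p) (stereo b a).

(* [γ] = k [u] in H_1(S^2 \ {a,b}), u a loop positively oriented w.r.t. a
   (S^2 oriented by the outward normal).  The plane b^⊥ is oriented by the
   normal -b, which makes the stereographic projection from b orientation
   preserving; k is the winding number of F_ab ∘ γ around 0, expressed by a
   continuous lift θ of the angle. *)
Definition wind (a b : pt) (γ : R -> pt) (k : Z) : Prop :=
  let u := vscale (/ vnorm (Fab a b (γ 0))) (Fab a b (γ 0)) in
  exists θ : R -> R, real_cont01 θ /\
    (forall t, unit_int t ->
       Fab a b (γ t) = vscale (vnorm (Fab a b (γ t)))
         (vadd (vscale (cos (θ t)) u) (vscale (sin (θ t)) (cross (vscale (-1) b) u)))) /\
    θ 1 - θ 0 = 2 * PI * IZR k.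

Definition loop_avoiding (a b : pt) (γ : R -> pt) : Prop :=
  is_path γ /\ γ 0 = γ 1 /\ avoids γ a /\ avoids γ b.

(* orientation preserving: f_* sends the positive generator of H_1(S^2\{a,b})
   (w.r.t. a) to the positive generator of H_1(S^2\{f a, f b}) (w.r.t. f a). *)
Definition orient_pres (f : pt -> pt) : Prop :=
  forall a b, on_S2 a -> on_S2 b -> a <> b ->
  forall γ, loop_avoiding a b γ ->
  forall k, wind a b γ k -> wind (f a) (f b) (fun t => f (γ t)) k.

(* α · β = k  (α from x1 to x2 in S^2\{x3,x4}, β from x3 to x4 in S^2\{x1,x2}) *)
Definition int_number (x1 x2 x3 x4 : pt) (α β : R -> pt) (k : Z) : Prop :=
  exists δ : R -> pt, is_path δ /\ δ 0 = x4 /\ δ 1 = x3 /\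
    (forall s t, unit_int s -> unit_int t -> δ s <> α t) /\
    wind x1 x2 (concat δ β) k.

Definition adm_alpha (x1 x2 x3 x4 : pt) (α : R -> pt) : Prop :=
  is_path α /\ α 0 = x1 /\ α 1 = x2 /\ avoids α x3 /\ avoids α x4.
Definition adm_beta (x1 x2 x3 x4 : pt) (β : R -> pt) : Prop :=
  is_path β /\ β 0 = x3 /\ β 1 = x4 /\ avoids β x1 /\ avoids β x2.

(* R_f(x1,x2,x3,x4) = r, i.e. r = α·(f∘β) − α·β for some admissible α, β
   (the value is independent of the choices). *)
Definition Rcal (f : pt -> pt) (x1 x2 x3 x4 : pt) (r : Z) : Prop :=
  exists α β : R -> pt, adm_alpha x1 x2 x3 x4 α /\ adm_beta x1 x2 x3 x4 β /\
  exists k1 k2 : Z,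
    int_number x1 x2 x3 x4 α (fun t => f (β t)) k1 /\
    int_number x1 x2 x3 x4 α β k2 /\ r = (k1 - k2)%Z.

(* The class of a loop in [H_1(S^2 \ {x1, x2})] is its winding number around
   the stereographic image of [x1] when projecting from [x2]; write [Th g] for
   the total change of angle of a path [g] seen from there.  For [delta] from
   [x4] to [x3] avoiding [alpha], [alpha . beta = (Th delta + Th beta) / 2 PI], so
   [R_F = (Th (F o beta) - Th beta) / 2 PI]: the contribution of [delta] cancels.
   This value does not depend on [beta], since for another admissible [beta']
   the loop [beta^-1 beta'] and its image under [F] have the same winding
   number.  Choosing [g o beta] as the second path for [f],
     [Th (f g beta) - Th beta = (Th (f (g beta)) - Th (g beta)) + (Th (g beta) - Th beta)],
   which is the additivity [R_fg = R_f + R_g].  The analytic work is the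
   existence and uniqueness of continuous angle lifts, and the vanishing of
   the winding number of a loop disjoint from a path [alpha] joining [x1] to
   the pole: sliding the centre along [alpha] keeps the winding number
   constant and finally sends the centre to infinity. *)

From Stdlib Require Import Reals ZArith Lra Lia Psatz Nsatz.
From Stdlib Require Import Classical ClassicalEpsilon FunctionalExtensionality.
Open Scope R_scope.

(** * Continuity on intervals *)

Lemma continuity_pt_of_eps (f : R -> R) x :
  (forall eps, eps > 0 -> exists del, del > 0 /\
     forall y, Rabs (y - x) < del -> Rabs (f y - f x) < eps) ->
  continuity_pt f x.
Proof.
  intros H eps He. destruct (H eps He) as [d [Hd H2]]. exists d; split; auto.
  intros y [_ Hy]. simpl in *. unfold Rdist in *. apply H2; auto.
Qed.

Lemma eps_of_continuity_pt (f : R -> R) x : continuity_pt f x ->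
  forall eps, eps > 0 -> exists del, del > 0 /\
    forall y, Rabs (y - x) < del -> Rabs (f y - f x) < eps.
Proof.
  intros H eps He. destruct (H eps He) as [d [Hd H2]]. exists d; split; auto.
  intros y Hy. destruct (Req_dec y x) as [->|Hne].
  - unfold Rminus; rewrite Rplus_opp_r, Rabs_R0; auto.
  - apply (H2 y). split; [split; [exact I| auto] | exact Hy].
Qed.

(* Pointwise forms of the Stdlib lemmas, which are stated for [plus_fct] etc.
   and do not unify with lambda terms. *)
Lemma cpt_plus f g x : continuity_pt f x -> continuity_pt g x ->
  continuity_pt (fun t => f t + g t) x.
Proof. intros; apply (continuity_pt_plus f g x); auto. Qed.
Lemma cpt_minus f g x : continuity_pt f x -> continuity_pt g x ->
  continuity_pt (fun t => f t - g t) x.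
Proof. intros; apply (continuity_pt_minus f g x); auto. Qed.
Lemma cpt_mult f g x : continuity_pt f x -> continuity_pt g x ->
  continuity_pt (fun t => f t * g t) x.
Proof. intros; apply (continuity_pt_mult f g x); auto. Qed.
Lemma cpt_div f g x : continuity_pt f x -> continuity_pt g x -> g x <> 0 ->
  continuity_pt (fun t => f t / g t) x.
Proof. intros; apply (continuity_pt_div f g x); auto. Qed.
Lemma cpt_inv g x : continuity_pt g x -> g x <> 0 -> continuity_pt (fun t => / g t) x.
Proof. intros; apply (continuity_pt_inv g x); auto. Qed.
Lemma cpt_const c x : continuity_pt (fun _ => c) x.
Proof. apply continuity_pt_const. intros a b; reflexivity. Qed.
Lemma cpt_id x : continuity_pt (fun t => t) x.
Proof. apply derivable_continuous_pt, derivable_pt_id. Qed.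
Lemma cpt_comp f g x : continuity_pt g x -> continuity_pt f (g x) ->
  continuity_pt (fun t => f (g t)) x.
Proof. intros; apply (continuity_pt_comp g f x); auto. Qed.
Lemma cpt_atan x : continuity_pt atan x.
Proof. apply derivable_continuous_pt, derivable_pt_atan. Qed.
Lemma cpt_ext f g x : (forall t, f t = g t) -> continuity_pt f x -> continuity_pt g x.
Proof. intros H. replace g with f; auto. apply functional_extensionality; auto. Qed.

Lemma continuity_of_1_lipschitz (g : R -> R) :
  (forall s t, Rabs (g s - g t) <= Rabs (s - t)) -> continuity g.
Proof.
  intros H x. apply continuity_pt_of_eps. intros e He. exists e; split; auto.
  intros y Hy. eapply Rle_lt_trans; [apply H|exact Hy].
Qed.

Definition clamp (a b t : R) := Rmax a (Rmin b t).

Lemma clamp_lip a b s t : Rabs (clamp a b s - clamp a b t) <= Rabs (s - t).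
Proof.
  unfold clamp, Rmax, Rmin.
  repeat destruct Rle_dec; unfold Rabs; repeat destruct Rcase_abs; lra.
Qed.

Lemma clamp_in a b t : a <= b -> a <= clamp a b t <= b.
Proof. intros; unfold clamp, Rmax, Rmin; repeat destruct Rle_dec; lra. Qed.

Lemma clamp_id a b t : a <= t <= b -> clamp a b t = t.
Proof. intros; unfold clamp, Rmax, Rmin; repeat destruct Rle_dec; lra. Qed.

Lemma Rmin_lip t a b : Rabs (Rmin t a - Rmin t b) <= Rabs (a - b).
Proof. unfold Rmin; repeat destruct Rle_dec; unfold Rabs; repeat destruct Rcase_abs; lra. Qed.

Definition cont_on (a b : R) (h : R -> R) :=
  forall t, a <= t <= b -> forall eps, eps > 0 -> exists del, del > 0 /\
    forall s, a <= s <= b -> Rabs (s - t) < del -> Rabs (h t - h s) < eps.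

Lemma continuity_clamp a b h : a <= b -> cont_on a b h ->
  continuity (fun t => h (clamp a b t)).
Proof.
  intros Hab H x. apply continuity_pt_of_eps. intros e He.
  destruct (H (clamp a b x) (clamp_in a b x Hab) e He) as [d [Hd H2]].
  exists d; split; auto. intros y Hy.
  rewrite Rabs_minus_sym. apply H2. apply clamp_in; auto.
  eapply Rle_lt_trans; [apply clamp_lip| exact Hy].
Qed.

Lemma cont_on_of_continuity_pt a b h :
  (forall t, a <= t <= b -> continuity_pt h t) -> cont_on a b h.
Proof.
  intros H t Ht e He. destruct (eps_of_continuity_pt h t (H t Ht) e He) as [d [Hd H2]].
  exists d; split; auto. intros s Hs Hst. rewrite Rabs_minus_sym. apply H2; auto.
Qed.

Lemma cont_on_ext a b f g : (forall t, a <= t <= b -> f t = g t) ->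
  cont_on a b f -> cont_on a b g.
Proof.
  intros E H t Ht e He. destruct (H t Ht e He) as [d [Hd H2]]. exists d; split; auto.
  intros s Hs Hst. rewrite <- !E; auto.
Qed.

Lemma cont_on_opp a b f : cont_on a b f -> cont_on a b (fun t => - f t).
Proof.
  intros H t Ht e He. destruct (H t Ht e He) as [d [Hd H2]]. exists d; split; auto.
  intros s Hs Hst. replace (- f t - - f s) with (- (f t - f s)) by ring.
  rewrite Rabs_Ropp; auto.
Qed.

Lemma cont_on_minus a b f g : cont_on a b f -> cont_on a b g ->
  cont_on a b (fun t => f t - g t).
Proof.
  intros Hf Hg t Ht e He.
  destruct (Hf t Ht (e/2) ltac:(lra)) as [d1 [Hd1 H1]].
  destruct (Hg t Ht (e/2) ltac:(lra)) as [d2 [Hd2 H2]].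
  exists (Rmin d1 d2); split; [unfold Rmin; destruct Rle_dec; lra|].
  intros s Hs Hst.
  assert (A1 := H1 s Hs ltac:(eapply Rlt_le_trans; [exact Hst| apply Rmin_l])).
  assert (A2 := H2 s Hs ltac:(eapply Rlt_le_trans; [exact Hst| apply Rmin_r])).
  apply Rabs_def2 in A1. apply Rabs_def2 in A2. apply Rabs_def1; lra.
Qed.

Lemma cont_on_plus a b f g : cont_on a b f -> cont_on a b g ->
  cont_on a b (fun t => f t + g t).
Proof.
  intros Hf Hg. apply (cont_on_ext a b (fun t => f t - - g t)); [intros; ring|].
  apply cont_on_minus; auto. apply cont_on_opp; auto.
Qed.

Lemma cont_on_affine th k c : cont_on 0 1 th -> Rabs k <= 1 ->
  (forall t, 0 <= t <= 1 -> 0 <= k * t + c <= 1) -> cont_on 0 1 (fun t => th (k * t + c)).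
Proof.
  intros H Hk Hm t Ht e He. destruct (H (k * t + c) (Hm t Ht) e He) as [d [Hd H2]].
  exists d; split; auto. intros s Hs Hst. apply H2; auto.
  replace (k * s + c - (k * t + c)) with (k * (s - t)) by ring. rewrite Rabs_mult.
  assert (0 <= Rabs k) by apply Rabs_pos. assert (0 <= Rabs (s - t)) by apply Rabs_pos. nra.
Qed.

(* Intermediate value theorem applied to [h] extended by clamping: a jump of
   [h] between two multiples of [PI] would make it take a value [k PI + PI/2]. *)
Lemma cont_on_multiple_PI_const a b h : a <= b -> cont_on a b h ->
  (forall t, a <= t <= b -> exists k : Z, h t = IZR k * PI) -> h b = h a.
Proof.
  intros Hab Hc Hd.
  assert (Hle : forall h, cont_on a b h ->
            (forall t, a <= t <= b -> exists k : Z, h t = IZR k * PI) ->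
            h b <= h a).
  { clear h Hc Hd. intros h Hc Hd. apply Rnot_lt_le. intro Hlt.
    assert (Hab' : a < b) by (destruct (Req_dec a b) as [->|]; lra).
    pose (he := fun t => h (clamp a b t)).
    assert (Hce : continuity he) by (apply continuity_clamp; auto).
    destruct (Hd a ltac:(lra)) as [ka Hka]. destruct (Hd b ltac:(lra)) as [kb Hkb].
    assert (HPI := PI_RGT_0).
    assert (Hk : IZR ka + 1 <= IZR kb).
    { rewrite <- plus_IZR. apply IZR_le. enough (ka < kb)%Z by lia.
      apply lt_IZR. apply Rmult_lt_reg_r with PI; lra. }
    pose (g := fun t => he t - (IZR ka * PI + PI / 2)).
    assert (Hg : continuity g) by (intro x; apply cpt_minus; [apply Hce| apply cpt_const]).
    destruct (IVT g a b Hg Hab') as [z [Hz Hgz]].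
    - unfold g, he; rewrite clamp_id, Hka by lra; lra.
    - unfold g, he; rewrite clamp_id, Hkb by lra; nra.
    - unfold g, he in Hgz. rewrite clamp_id in Hgz by lra.
      destruct (Hd z Hz) as [k Hk2]. rewrite Hk2 in Hgz.
      assert (E : IZR (2 * (k - ka)) = 1).
      { rewrite mult_IZR, minus_IZR. apply Rmult_eq_reg_r with PI; [|lra]. nra. }
      apply eq_IZR in E. lia. }
  apply Rle_antisym; [apply Hle; auto|].
  enough (- h b <= - h a) by lra.
  apply (Hle (fun t => - h t)); [apply cont_on_opp; auto|].
  intros t Ht. destruct (Hd t Ht) as [k Hk]. exists (- k)%Z. rewrite opp_IZR, Hk. ring.
Qed.

(** * Polar angles and their continuous lifts *)

Definition polar (x y th : R) :=
  x = sqrt (x * x + y * y) * cos th /\ y = sqrt (x * x + y * y) * sin th.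

(* The angle from [(c, d)] to [(a, b)], valid when the two vectors make an
   acute angle. *)
Definition angle_diff (a b c d : R) := atan ((b * c - a * d) / (a * c + b * d)).

Lemma polar_add_angle_diff a b c d al : c * c + d * d > 0 -> polar c d al ->
  a * c + b * d > 0 -> polar a b (al + angle_diff a b c d).
Proof.
  intros Hw [Hc Hd] Hre. unfold angle_diff.
  set (re := a * c + b * d) in *. set (im := b * c - a * d).
  set (r := sqrt (c * c + d * d)) in *.
  assert (Hab : a * a + b * b > 0).
  { destruct (Req_dec a 0); destruct (Req_dec b 0); subst re; try nra. }
  set (rho := sqrt (a * a + b * b)).
  assert (Hr : r > 0) by (apply sqrt_lt_R0; lra).
  assert (Hrho : rho > 0) by (apply sqrt_lt_R0; lra).
  assert (Hrr : r * r = c * c + d * d) by (apply sqrt_sqrt; lra).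
  assert (Hrhorho : rho * rho = a * a + b * b) by (apply sqrt_sqrt; lra).
  assert (Hid : re * re + im * im = (rho * rho) * (r * r))
    by (rewrite Hrr, Hrhorho; subst re im; ring).
  assert (Hs : sqrt (1 + (im / re)²) = rho * r / re).
  { assert (Hpos : 0 <= rho * r / re) by (apply Rlt_le, Rdiv_lt_0_compat; [nra|lra]).
    rewrite <- (sqrt_square _ Hpos). f_equal.
    replace (1 + (im / re)²) with ((re * re + im * im) / (re * re)) by (unfold Rsqr; field; lra).
    rewrite Hid. field. lra. }
  unfold polar. fold rho. rewrite cos_plus, sin_plus, cos_atan, sin_atan, Hs.
  assert (Hca : cos al = c / r) by (rewrite Hc; field; lra).
  assert (Hsa : sin al = d / r) by (rewrite Hd; field; lra).
  rewrite Hca, Hsa. split.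
  - replace (rho * (c / r * (1 / (rho * r / re)) - d / r * (im / re / (rho * r / re))))
      with ((c * re - d * im) / (r * r)) by (field; repeat split; lra).
    replace (c * re - d * im) with (a * (r * r)) by (rewrite Hrr; subst re im; ring).
    field. lra.
  - replace (rho * (d / r * (1 / (rho * r / re)) + c / r * (im / re / (rho * r / re))))
      with ((d * re + c * im) / (r * r)) by (field; repeat split; lra).
    replace (d * re + c * im) with (b * (r * r)) by (rewrite Hrr; subst re im; ring).
    field. lra.
Qed.

Lemma polar_exists x y : x * x + y * y > 0 -> exists th, polar x y th.
Proof.
  intros H.
  assert (Hs1 : sqrt 1 = 1) by apply sqrt_1.
  destruct (Rtotal_order x 0) as [Hx|[Hx|Hx]].
  - exists (PI + angle_diff x y (-1) 0). apply polar_add_angle_diff; try lra.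
    unfold polar. replace (-1 * -1 + 0 * 0) with 1 by ring.
    rewrite Hs1, cos_PI, sin_PI; split; ring.
  - subst x. destruct (Rtotal_order y 0) as [Hy|[Hy|Hy]].
    + exists (- (PI / 2) + angle_diff 0 y 0 (-1)). apply polar_add_angle_diff; try lra.
      unfold polar. replace (0 * 0 + -1 * -1) with 1 by ring.
      rewrite Hs1, cos_neg, sin_neg, cos_PI2, sin_PI2; split; ring.
    + subst; lra.
    + exists (PI / 2 + angle_diff 0 y 0 1). apply polar_add_angle_diff; try lra.
      unfold polar. replace (0 * 0 + 1 * 1) with 1 by ring.
      rewrite Hs1, cos_PI2, sin_PI2; split; ring.
  - exists (0 + angle_diff x y 1 0). apply polar_add_angle_diff; try lra.
    unfold polar. replace (1 * 1 + 0 * 0) with 1 by ring.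
    rewrite Hs1, cos_0, sin_0; split; ring.
Qed.

Lemma polar_cos_sin_eq x y a b : x * x + y * y > 0 -> polar x y a -> polar x y b ->
  cos a = cos b /\ sin a = sin b.
Proof.
  intros H [Ha1 Ha2] [Hb1 Hb2].
  assert (Hr : sqrt (x * x + y * y) > 0) by (apply sqrt_lt_R0; lra).
  set (r := sqrt (x * x + y * y)) in *.
  split; apply Rmult_eq_reg_l with r; lra.
Qed.

Lemma polar_diff_PI x y a b : x * x + y * y > 0 -> polar x y a -> polar x y b ->
  exists k : Z, a - b = IZR k * PI.
Proof.
  intros H Ha Hb. destruct (polar_cos_sin_eq x y a b H Ha Hb) as [E1 E2].
  apply sin_eq_0_0. rewrite sin_minus, E1, E2. ring.
Qed.

Lemma polar_diff_2PI x y a b : x * x + y * y > 0 -> polar x y a -> polar x y b ->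
  exists k : Z, a - b = 2 * PI * IZR k.
Proof.
  intros H Ha Hb. destruct (polar_cos_sin_eq x y a b H Ha Hb) as [E1 E2].
  assert (Hs : sin ((a - b) / 2) = 0).
  { assert (Hc : cos (a - b) = 1).
    { rewrite cos_minus, E1, E2. rewrite <- (sin2_cos2 b). unfold Rsqr; ring. }
    replace (a - b) with (2 * ((a - b) / 2)) in Hc by field.
    rewrite cos_2a_sin in Hc.
    assert (sin ((a - b) / 2) * sin ((a - b) / 2) = 0) by lra.
    destruct (Rmult_integral _ _ H0); auto. }
  destruct (sin_eq_0_0 _ Hs) as [k Hk]. exists k. lra.
Qed.

Lemma inner_pos_of_close p1 p2 d1 d2 m : m > 0 -> p1 * p1 + p2 * p2 >= m ->
  Rabs d1 < Rmin 1 (m / 4) -> Rabs d2 < Rmin 1 (m / 4) ->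
  (p1 - d1) * p1 + (p2 - d2) * p2 > 0.
Proof.
  intros Hm Hp H1 H2. set (e := Rmin 1 (m / 4)) in *.
  assert (He2 : e * e <= m / 4) by (unfold e, Rmin; destruct Rle_dec; nra).
  apply Rabs_def2 in H1. apply Rabs_def2 in H2.
  assert (d1 * d1 < e * e) by nra. assert (d2 * d2 < e * e) by nra.
  assert (A1 : 0 <= (p1 / 2 - d1) * (p1 / 2 - d1)) by apply Rle_0_sqr.
  assert (A2 : 0 <= (p2 / 2 - d2) * (p2 / 2 - d2)) by apply Rle_0_sqr.
  nra.
Qed.

Lemma uniform_inner_pos (X Y : R -> R) : continuity X -> continuity Y ->
  (forall t, 0 <= t <= 1 -> X t * X t + Y t * Y t > 0) ->
  exists del, del > 0 /\ forall s t, 0 <= s <= 1 -> 0 <= t <= 1 ->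
    Rabs (s - t) < del -> X s * X t + Y s * Y t > 0.
Proof.
  intros HX HY Hnz.
  destruct (continuity_ab_min (fun t => X t * X t + Y t * Y t) 0 1 ltac:(lra))
    as [mx [Hmin Hmx]].
  { intros c _. apply cpt_plus; apply cpt_mult; auto. }
  set (m := X mx * X mx + Y mx * Y mx) in *.
  assert (Hm : m > 0) by (apply Hnz; auto).
  set (e := Rmin 1 (m / 4)).
  assert (He : 0 < e) by (unfold e, Rmin; destruct Rle_dec; lra).
  destruct (Heine X (fun c => 0 <= c <= 1) (compact_P3 0 1) (fun x _ => HX x)
    (mkposreal e He)) as [[dx Hdx] Ex].
  destruct (Heine Y (fun c => 0 <= c <= 1) (compact_P3 0 1) (fun x _ => HY x)
    (mkposreal e He)) as [[dy Hdy] Ey].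
  simpl in Ex, Ey.
  exists (Rmin dx dy). split; [unfold Rmin; destruct Rle_dec; lra|].
  intros s t Hs Ht Hst.
  replace (X s * X t + Y s * Y t)
    with ((X t - (X t - X s)) * X t + (Y t - (Y t - Y s)) * Y t) by ring.
  apply inner_pos_of_close with m; auto; [apply Rle_ge, Hmin; auto| |].
  - apply Ex; auto. rewrite Rabs_minus_sym.
    eapply Rlt_le_trans; [exact Hst|apply Rmin_l].
  - apply Ey; auto. rewrite Rabs_minus_sym.
    eapply Rlt_le_trans; [exact Hst|apply Rmin_r].
Qed.

Fixpoint angle_sum (th0 : R) (step : nat -> R -> R) (k : nat) (t : R) : R :=
  match k with O => th0 | S i => angle_sum th0 step i t + step i t end.

(* The lift is a finite sum of [angle_diff]s between the points at the knots
   [0, 1/n, ..., i/n] truncated at [t]; consecutive knots are close enough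
   for each difference to be an acute angle. *)
Theorem polar_lift_exists (X Y : R -> R) : continuity X -> continuity Y ->
  (forall t, 0 <= t <= 1 -> X t * X t + Y t * Y t > 0) ->
  exists th, continuity th /\ forall t, 0 <= t <= 1 -> polar (X t) (Y t) (th t).
Proof.
  intros HX HY Hnz.
  destruct (uniform_inner_pos X Y HX HY Hnz) as [del [Hdel Hclose]].
  destruct (INR_archimed del 1 ltac:(lra)) as [n Hn].
  assert (Hn0 : INR n > 0) by (destruct n; [simpl in Hn; lra|apply lt_0_INR; lia]).
  set (knot := fun (i : nat) (t : R) => clamp 0 1 (Rmin t (INR i / INR n))).
  assert (Hknot_in : forall i t, 0 <= knot i t <= 1) by (intros; apply clamp_in; lra).
  assert (Hre : forall i t,
    X (knot (S i) t) * X (knot i t) + Y (knot (S i) t) * Y (knot i t) > 0).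
  { intros i t. apply Hclose; auto. unfold knot.
    eapply Rle_lt_trans; [apply clamp_lip|].
    eapply Rle_lt_trans; [apply Rmin_lip|]. rewrite S_INR.
    replace ((INR i + 1) / INR n - INR i / INR n) with (/ INR n) by (field; lra).
    rewrite Rabs_right by (apply Rle_ge, Rlt_le, Rinv_0_lt_compat; lra).
    apply (Rmult_lt_reg_r (INR n)); auto. rewrite Rinv_l by lra. lra. }
  assert (Hknotc : forall i, continuity (knot i)).
  { intro i. apply continuity_of_1_lipschitz. intros s t. unfold knot.
    eapply Rle_trans; [apply clamp_lip|].
    unfold Rmin; repeat destruct Rle_dec; unfold Rabs; repeat destruct Rcase_abs; lra. }
  destruct (polar_exists (X 0) (Y 0) (Hnz 0 ltac:(lra))) as [th0 Hth0].
  set (step := fun i t =>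
    angle_diff (X (knot (S i) t)) (Y (knot (S i) t)) (X (knot i t)) (Y (knot i t))).
  assert (Hstep : forall i t, continuity_pt (step i) t).
  { intros i t. unfold step, angle_diff. apply cpt_comp; [|apply cpt_atan].
    specialize (Hre i t).
    apply cpt_div; [| |lra]; repeat first [apply cpt_minus | apply cpt_plus | apply cpt_mult];
      apply cpt_comp; auto; apply Hknotc. }
  assert (HP : forall k t, polar (X (knot k t)) (Y (knot k t)) (angle_sum th0 step k t)).
  { induction k; intro t; simpl.
    - replace (knot 0%nat t) with 0; auto. unfold knot. simpl.
      replace (0 / INR n) with 0 by (field; lra).
      unfold clamp, Rmin, Rmax; repeat destruct Rle_dec; lra.
    - apply polar_add_angle_diff; auto. }
  assert (Hsum : forall k t, continuity_pt (angle_sum th0 step k) t).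
  { induction k; intro t; simpl; [apply cpt_const|]. apply cpt_plus; auto. }
  exists (angle_sum th0 step n). split; [intro t; apply Hsum|].
  intros t Ht. specialize (HP n t).
  replace (knot n t) with t in HP; auto. unfold knot.
  replace (INR n / INR n) with 1 by (field; lra).
  rewrite Rmin_left by lra. symmetry. apply clamp_id; auto.
Qed.

Lemma polar_lift_increment_unique (X Y th1 th2 : R -> R) :
  (forall t, 0 <= t <= 1 -> X t * X t + Y t * Y t > 0) ->
  cont_on 0 1 th1 -> cont_on 0 1 th2 ->
  (forall t, 0 <= t <= 1 -> polar (X t) (Y t) (th1 t)) ->
  (forall t, 0 <= t <= 1 -> polar (X t) (Y t) (th2 t)) ->
  th1 1 - th1 0 = th2 1 - th2 0.
Proof.
  intros Hnz H1 H2 P1 P2.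
  assert (E : th1 1 - th2 1 = th1 0 - th2 0).
  { apply (cont_on_multiple_PI_const 0 1 (fun t => th1 t - th2 t)); [lra| |].
    - apply cont_on_minus; auto.
    - intros t Ht. eapply polar_diff_PI; eauto. }
  lra.
Qed.

(** * Vectors, frames and stereographic projection *)

Definition px (p : pt) := fst (fst p).
Definition py (p : pt) := snd (fst p).
Definition pz (p : pt) := snd p.

Lemma pt_ext p q : px p = px q -> py p = py q -> pz p = pz q -> p = q.
Proof.
  destruct p as [[a b] c]; destruct q as [[d e] f]; unfold px, py, pz; simpl.
  intros; subst; auto.
Qed.

Lemma dot_c p q : dot p q = px p * px q + py p * py q + pz p * pz q.
Proof. destruct p as [[a b] c]; destruct q as [[d e] f]; reflexivity. Qed.

Ltac destruct_pts := repeat match goal with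
  | p : pt |- _ =>
      let a := fresh "a" in let b := fresh "b" in let c := fresh "c" in destruct p as [[a b] c]
  | p : (R * R * R)%type |- _ =>
      let a := fresh "a" in let b := fresh "b" in let c := fresh "c" in destruct p as [[a b] c]
  end; unfold px, py, pz, dot, vsub, vadd, vscale, cross in *; simpl in *.

Lemma dot_sym p q : dot p q = dot q p.
Proof. destruct_pts; ring. Qed.
Lemma dot_comb a c u w X : dot (vadd (vscale a u) (vscale c w)) X = a * dot u X + c * dot w X.
Proof. destruct_pts; ring. Qed.
Lemma dot_vsub p q X : dot (vsub p q) X = dot p X - dot q X.
Proof. destruct_pts; ring. Qed.
Lemma dot_vscale a p X : dot (vscale a p) X = a * dot p X.
Proof. destruct_pts; ring. Qed.

Lemma sumsq0 x y z : x * x + y * y + z * z = 0 -> x = 0 /\ y = 0 /\ z = 0.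
Proof.
  intros H. assert (A := Rle_0_sqr x). assert (B := Rle_0_sqr y).
  assert (C := Rle_0_sqr z). unfold Rsqr in *.
  split; [|split]; apply Rsqr_0_uniq; unfold Rsqr; lra.
Qed.

Lemma dot_pos v : v <> (0, 0, 0) -> dot v v > 0.
Proof.
  intros H. rewrite dot_c. assert (A := Rle_0_sqr (px v)). assert (B := Rle_0_sqr (py v)).
  assert (C := Rle_0_sqr (pz v)). unfold Rsqr in *.
  destruct (Rle_lt_or_eq_dec 0 _ (ltac:(lra) : 0 <= px v * px v + py v * py v + pz v * pz v))
    as [|E]; [lra|].
  destruct (sumsq0 _ _ _ (eq_sym E)) as [E1 [E2 E3]].
  exfalso. apply H. apply pt_ext; auto.
Qed.

Definition normalize (v : pt) := vscale (/ vnorm v) v.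

Lemma normalize_S2 v : v <> (0, 0, 0) -> on_S2 (normalize v).
Proof.
  intros H. assert (Hp := dot_pos v H). unfold on_S2, normalize, vnorm.
  rewrite dot_vscale.
  replace (dot v (vscale (/ sqrt (dot v v)) v)) with (/ sqrt (dot v v) * dot v v)
    by (destruct_pts; ring).
  assert (Hs : sqrt (dot v v) * sqrt (dot v v) = dot v v) by (apply sqrt_sqrt; lra).
  assert (sqrt (dot v v) > 0) by (apply sqrt_lt_R0; lra).
  rewrite <- Hs at 3. field. lra.
Qed.

Lemma normalize_unit v : on_S2 v -> normalize v = v.
Proof.
  unfold on_S2, normalize, vnorm. intros H. rewrite H, sqrt_1. replace (/ 1) with 1 by field.
  destruct_pts. f_equal; [f_equal|]; ring.
Qed.

Lemma normalize_eq A B : A <> (0, 0, 0) -> B <> (0, 0, 0) -> normalize A = normalize B ->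
  A = vscale (vnorm A / vnorm B) B.
Proof.
  intros HA HB E. assert (HA' := dot_pos A HA). assert (HB' := dot_pos B HB).
  assert (nA : vnorm A > 0) by (apply sqrt_lt_R0; lra).
  assert (nB : vnorm B > 0) by (apply sqrt_lt_R0; lra).
  unfold normalize in E. set (a := vnorm A) in *. set (b := vnorm B) in *. clearbody a b.
  assert (E2 : vscale a (vscale (/ a) A) = vscale a (vscale (/ b) B)) by (rewrite E; auto).
  replace (vscale a (vscale (/ a) A)) with A in E2
    by (destruct_pts; f_equal; [f_equal|]; field; lra).
  rewrite E2. destruct_pts. f_equal; [f_equal|]; field; lra.
Qed.

Lemma dot_vsub_pos p q : p <> q -> dot (vsub p q) (vsub p q) > 0.
Proof.
  intros Hne. apply dot_pos. intro E. apply Hne.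
  apply pt_ext; destruct_pts; injection E; lra.
Qed.

Lemma sphere_sub_sq p q : on_S2 p -> on_S2 q -> dot (vsub p q) (vsub p q) = 2 - 2 * dot p q.
Proof.
  unfold on_S2; intros Hp Hq.
  rewrite dot_vsub, !(dot_sym _ (vsub p q)), !dot_vsub, (dot_sym q p). lra.
Qed.

Lemma sphere_dot_lt p b : on_S2 p -> on_S2 b -> p <> b -> dot p b < 1.
Proof.
  intros Hp Hb Hne. assert (H := dot_vsub_pos p b Hne).
  rewrite sphere_sub_sq in H; auto. lra.
Qed.

(* [(u, w, b)] with [w = -b x u] is a positive orthonormal frame when [u] is a
   unit vector orthogonal to the unit vector [b]. *)
Definition frame_w (b u : pt) := cross (vscale (-1) b) u.

Lemma frame_w_facts u b : dot u u = 1 -> dot b b = 1 -> dot u b = 0 ->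
  dot (frame_w b u) (frame_w b u) = 1 /\ dot (frame_w b u) u = 0 /\ dot (frame_w b u) b = 0.
Proof.
  intros Hu Hb Hub. unfold frame_w.
  assert (E : dot (cross (vscale (-1) b) u) (cross (vscale (-1) b) u)
              = dot u u * dot b b - dot u b * dot u b) by (destruct_pts; ring).
  rewrite E, Hu, Hb, Hub. repeat split; [ring| |]; destruct_pts; ring.
Qed.

Lemma frame_decomp P u b : dot u u = 1 -> dot b b = 1 -> dot u b = 0 -> dot P b = 0 ->
  P = vadd (vscale (dot P u) u) (vscale (dot P (frame_w b u)) (frame_w b u)).
Proof. unfold frame_w. intros. destruct_pts. f_equal; [f_equal|]; nsatz. Qed.

Lemma dot_self_frame P u b : dot u u = 1 -> dot b b = 1 -> dot u b = 0 -> dot P b = 0 ->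
  dot P P = dot P u * dot P u + dot P (frame_w b u) * dot P (frame_w b u).
Proof.
  intros Hu Hb Hub HPb.
  destruct (frame_w_facts u b Hu Hb Hub) as [Hw1 [Hw2 _]].
  assert (HP := frame_decomp P u b Hu Hb Hub HPb).
  set (w := frame_w b u) in *. set (a := dot P u) in *. set (c := dot P w) in *.
  clearbody a c. rewrite HP, dot_comb, (dot_sym u), (dot_sym w), !dot_comb.
  rewrite (dot_sym u w), Hw2, Hu, Hw1. ring.
Qed.

Lemma frame_polar P u b th : dot u u = 1 -> dot b b = 1 -> dot u b = 0 -> dot P b = 0 ->
  (P = vscale (vnorm P) (vadd (vscale (cos th) u) (vscale (sin th) (frame_w b u)))
   <-> polar (dot P u) (dot P (frame_w b u)) th).
Proof.
  intros Hu Hb Hub HPb.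
  destruct (frame_w_facts u b Hu Hb Hub) as [Hw1 [Hw2 _]].
  assert (HPP := dot_self_frame P u b Hu Hb Hub HPb).
  assert (HP := frame_decomp P u b Hu Hb Hub HPb).
  set (w := frame_w b u) in *.
  unfold vnorm. rewrite HPP. unfold polar.
  set (a := dot P u) in *. set (c := dot P w) in *.
  set (r := sqrt (a * a + c * c)).
  split.
  - intro E.
    assert (Ea : a = dot (vscale r (vadd (vscale (cos th) u) (vscale (sin th) w))) u)
      by (unfold a; rewrite E at 1; reflexivity).
    assert (Ec : c = dot (vscale r (vadd (vscale (cos th) u) (vscale (sin th) w))) w)
      by (unfold c; rewrite E at 1; reflexivity).
    rewrite dot_vscale, dot_comb in Ea, Ec. rewrite Hw2, Hu in Ea.
    rewrite (dot_sym u w), Hw2, Hw1 in Ec.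
    split; [rewrite Ea at 1 | rewrite Ec at 1]; ring.
  - intros [Ea Ec]. rewrite HP at 1. clearbody r a c w. clear HP. rewrite Ea, Ec.
    destruct_pts. f_equal; [f_equal|]; ring.
Qed.

Lemma stereo_dot b p X :
  dot (stereo b p) X = (dot p X - dot p b * dot b X) * / (1 - dot p b).
Proof. unfold stereo. destruct_pts. ring. Qed.

Lemma stereo_perp b p : dot b b = 1 -> dot (stereo b p) b = 0.
Proof. intros H. rewrite stereo_dot, H. ring. Qed.

Lemma vsub_perp P Q b : dot P b = 0 -> dot Q b = 0 -> dot (vsub P Q) b = 0.
Proof. intros. rewrite dot_vsub. lra. Qed.

Lemma stereo_dist_sq b p q : on_S2 b -> on_S2 p -> on_S2 q -> dot p b < 1 -> dot q b < 1 ->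
  dot (vsub (stereo b p) (stereo b q)) (vsub (stereo b p) (stereo b q)) =
  dot (vsub p q) (vsub p q) / ((1 - dot p b) * (1 - dot q b)).
Proof.
  intros Hb Hp Hq H1 H2. rewrite (sphere_sub_sq p q Hp Hq). unfold on_S2 in *.
  replace (dot (vsub (stereo b p) (stereo b q)) (vsub (stereo b p) (stereo b q))) with
    (/ (1 - dot p b) * / (1 - dot p b)
         * (dot p p - 2 * dot p b * dot p b + dot p b * dot p b * dot b b)
     + / (1 - dot q b) * / (1 - dot q b)
         * (dot q q - 2 * dot q b * dot q b + dot q b * dot q b * dot b b)
     - 2 * / (1 - dot p b) * / (1 - dot q b)
         * (dot p q - 2 * dot p b * dot q b + dot p b * dot q b * dot b b))
    by (clear; unfold stereo; destruct_pts; ring).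
  rewrite Hb, Hp, Hq. field. split; lra.
Qed.

Lemma stereo_norm_sq b p : on_S2 b -> on_S2 p -> dot p b < 1 ->
  dot (stereo b p) (stereo b p) = (1 + dot p b) / (1 - dot p b).
Proof.
  unfold on_S2. intros Hb Hp H. rewrite stereo_dot. rewrite (dot_sym p), (dot_sym b), !stereo_dot.
  rewrite Hb, Hp, (dot_sym b p). field. lra.
Qed.

(** * The angle change of a path around a centre *)

Lemma Rabs_le_sqrt3 a b c : Rabs a <= sqrt (a * a + b * b + c * c).
Proof. rewrite <- sqrt_Rsqr_abs. apply sqrt_le_1_alt. unfold Rsqr. nra. Qed.

Lemma dist3_c p q : dist3 p q = sqrt ((px p - px q) * (px p - px q)
  + (py p - py q) * (py p - py q) + (pz p - pz q) * (pz p - pz q)).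
Proof. unfold dist3, vnorm. f_equal. destruct_pts. ring. Qed.

Lemma coords_le_dist3 p q : Rabs (px p - px q) <= dist3 p q /\
  Rabs (py p - py q) <= dist3 p q /\ Rabs (pz p - pz q) <= dist3 p q.
Proof.
  rewrite dist3_c. repeat split.
  - apply Rabs_le_sqrt3.
  - eapply Rle_trans; [apply (Rabs_le_sqrt3 _ (px p - px q) (pz p - pz q))|].
    apply sqrt_le_1_alt. lra.
  - eapply Rle_trans; [apply (Rabs_le_sqrt3 _ (px p - px q) (py p - py q))|].
    apply sqrt_le_1_alt. lra.
Qed.

Lemma dist3_lt_sq p q e : dist3 p q < e -> dot (vsub p q) (vsub p q) < e * e.
Proof.
  unfold dist3, vnorm. intros H.
  assert (H0 : 0 <= dot (vsub p q) (vsub p q)).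
  { rewrite dot_c. assert (A := Rle_0_sqr (px (vsub p q))).
    assert (B := Rle_0_sqr (py (vsub p q))). assert (C := Rle_0_sqr (pz (vsub p q))).
    unfold Rsqr in *. lra. }
  assert (0 <= sqrt (dot (vsub p q) (vsub p q))) by apply sqrt_pos.
  rewrite <- (sqrt_sqrt _ H0). nra.
Qed.

Lemma is_path_of_coords (g : R -> pt) : (forall t, 0 <= t <= 1 -> on_S2 (g t)) ->
  (forall t, 0 <= t <= 1 -> continuity_pt (fun s => px (g s)) t /\
     continuity_pt (fun s => py (g s)) t /\ continuity_pt (fun s => pz (g s)) t) ->
  is_path g.
Proof.
  intros HS HC. split; [exact HS|].
  intros t Ht e He. destruct (HC t Ht) as [C1 [C2 C3]].
  destruct (eps_of_continuity_pt _ _ C1 (e / 2) ltac:(lra)) as [d1 [Hd1 E1]].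
  destruct (eps_of_continuity_pt _ _ C2 (e / 2) ltac:(lra)) as [d2 [Hd2 E2]].
  destruct (eps_of_continuity_pt _ _ C3 (e / 2) ltac:(lra)) as [d3 [Hd3 E3]].
  exists (Rmin d1 (Rmin d2 d3)). split; [unfold Rmin; repeat destruct Rle_dec; lra|].
  intros s Hs Hst.
  assert (Hmin : Rmin d1 (Rmin d2 d3) <= d1 /\ Rmin d1 (Rmin d2 d3) <= d2 /\
                 Rmin d1 (Rmin d2 d3) <= d3) by (unfold Rmin; repeat destruct Rle_dec; lra).
  assert (A1 := E1 s ltac:(lra)). assert (A2 := E2 s ltac:(lra)). assert (A3 := E3 s ltac:(lra)).
  apply Rabs_def2 in A1. apply Rabs_def2 in A2. apply Rabs_def2 in A3.
  rewrite dist3_c. rewrite <- (sqrt_square e) by lra. apply sqrt_lt_1_alt. split.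
  - assert (A := Rle_0_sqr (px (g t) - px (g s))). assert (B := Rle_0_sqr (py (g t) - py (g s))).
    assert (C := Rle_0_sqr (pz (g t) - pz (g s))). unfold Rsqr in *. lra.
  - nra.
Qed.

Definition path_clamp (g : R -> pt) := fun t => g (clamp 0 1 t).

Lemma path_coords_continuous g : is_path g ->
  continuity (fun t => px (path_clamp g t)) /\ continuity (fun t => py (path_clamp g t)) /\
  continuity (fun t => pz (path_clamp g t)).
Proof.
  intros [_ Hc]. unfold path_clamp.
  split; [|split];
    [apply (continuity_clamp 0 1 (fun t => px (g t)))
    |apply (continuity_clamp 0 1 (fun t => py (g t)))
    |apply (continuity_clamp 0 1 (fun t => pz (g t)))]; try lra; intros t Ht e He;
  destruct (Hc t Ht e He) as [d [Hd H]]; exists d; split; auto; intros s Hs Hst;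
  specialize (H s Hs Hst); destruct (coords_le_dist3 (g t) (g s)) as [A [B C]]; lra.
Qed.

Lemma cpt_dot (g : R -> pt) X t :
  continuity (fun t => px (g t)) -> continuity (fun t => py (g t)) ->
  continuity (fun t => pz (g t)) -> continuity_pt (fun s => dot (g s) X) t.
Proof.
  intros H1 H2 H3.
  apply cpt_ext with (fun s => px (g s) * px X + py (g s) * py X + pz (g s) * pz X).
  { intro s; rewrite dot_c; auto. }
  repeat apply cpt_plus; apply cpt_mult; auto; apply cpt_const.
Qed.

Lemma cpt_stereo_dot (g : R -> pt) b X t :
  continuity (fun t => px (g t)) -> continuity (fun t => py (g t)) ->
  continuity (fun t => pz (g t)) -> dot (g t) b < 1 ->
  continuity_pt (fun s => dot (stereo b (g s)) X) t.
Proof.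
  intros H1 H2 H3 Hb.
  apply cpt_ext with (fun s => (dot (g s) X - dot (g s) b * dot b X) * / (1 - dot (g s) b)).
  { intro s. rewrite stereo_dot. reflexivity. }
  apply cpt_mult.
  - apply cpt_minus; [apply cpt_dot; auto| apply cpt_mult; [apply cpt_dot; auto|apply cpt_const]].
  - apply cpt_inv; [apply cpt_minus; [apply cpt_const|apply cpt_dot; auto]|lra].
Qed.

Definition chart_x b u c p := dot (vsub (stereo b p) c) u.
Definition chart_y b u c p := dot (vsub (stereo b p) c) (frame_w b u).

Definition angle_lift b u c (g : R -> pt) th := cont_on 0 1 th /\
  forall t, 0 <= t <= 1 -> polar (chart_x b u c (g t)) (chart_y b u c (g t)) (th t).

(* The total change of angle of the image of [g] around [c]; on loops it is
   [2 PI] times the winding number. *)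
Definition angle_change b u c g v := exists th, angle_lift b u c g th /\ th 1 - th 0 = v.

Definition misses_center b u c (g : R -> pt) := forall t, 0 <= t <= 1 ->
  chart_x b u c (g t) * chart_x b u c (g t) + chart_y b u c (g t) * chart_y b u c (g t) > 0.

Definition reverse (g : R -> pt) := fun t => g (1 - t).

Lemma chart_shift b u c c' p :
  chart_x b u c p = chart_x b u c' p - (dot c u - dot c' u) /\
  chart_y b u c p = chart_y b u c' p - (dot c (frame_w b u) - dot c' (frame_w b u)).
Proof. unfold chart_x, chart_y. rewrite !dot_vsub. split; ring. Qed.

Lemma chart_continuous g b u c : is_path g -> (forall t, 0 <= t <= 1 -> dot (g t) b < 1) ->
  continuity (fun t => chart_x b u c (path_clamp g t)) /\
  continuity (fun t => chart_y b u c (path_clamp g t)).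
Proof.
  intros Hg Hb. destruct (path_coords_continuous g Hg) as [H1 [H2 H3]].
  assert (Hb' : forall t, dot (path_clamp g t) b < 1) by (intro t; apply Hb, clamp_in; lra).
  assert (HX : forall X t, continuity_pt (fun s => dot (vsub (stereo b (path_clamp g s)) c) X) t).
  { intros X t. apply cpt_ext with (fun s => dot (stereo b (path_clamp g s)) X - dot c X).
    { intro s. rewrite dot_vsub. reflexivity. }
    apply cpt_minus; [apply cpt_stereo_dot; auto|apply cpt_const]. }
  split; intro t; apply HX.
Qed.

Lemma angle_change_exists b u c g : is_path g ->
  (forall t, 0 <= t <= 1 -> dot (g t) b < 1) -> misses_center b u c g ->
  exists v, angle_change b u c g v.
Proof.
  intros Hg Hb Hmiss. destruct (chart_continuous g b u c Hg Hb) as [CX CY].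
  destruct (polar_lift_exists _ _ CX CY) as [th [Cth Pth]].
  { intros t Ht. unfold path_clamp. rewrite clamp_id by lra. apply Hmiss; auto. }
  exists (th 1 - th 0), th. split; auto. split.
  - apply cont_on_of_continuity_pt. intros; apply Cth.
  - intros t Ht. specialize (Pth t Ht). unfold path_clamp in Pth.
    rewrite clamp_id in Pth by lra. exact Pth.
Qed.

Lemma angle_change_unique b u c g v1 v2 : misses_center b u c g ->
  angle_change b u c g v1 -> angle_change b u c g v2 -> v1 = v2.
Proof.
  intros Hg [t1 [[C1 P1] E1]] [t2 [[C2 P2] E2]]. subst.
  apply (polar_lift_increment_unique (fun t => chart_x b u c (g t))
    (fun t => chart_y b u c (g t))); auto.
Qed.

Lemma angle_change_loop b u c g v : misses_center b u c g -> g 0 = g 1 ->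
  angle_change b u c g v -> exists k : Z, v = 2 * PI * IZR k.
Proof.
  intros Hg Hl [th [[C P] E]]. subst v.
  assert (P0 := P 0 ltac:(lra)). assert (P1 := P 1 ltac:(lra)). rewrite <- Hl in P1.
  apply (polar_diff_2PI _ _ _ _ (Hg 0 ltac:(lra)) P1 P0).
Qed.

Lemma angle_change_concat b u c g1 g2 v : g1 1 = g2 0 -> angle_change b u c (concat g1 g2) v ->
  exists v1 v2, angle_change b u c g1 v1 /\ angle_change b u c g2 v2 /\ v = v1 + v2.
Proof.
  intros Hj [th [[Hc Hp] Hv]].
  exists (th (1/2) - th 0), (th 1 - th (1/2)). split; [|split; [|lra]].
  - exists (fun t => th ((1/2) * t + 0)). split; [split|].
    + apply cont_on_affine; auto. rewrite Rabs_right; lra. intros; lra.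
    + intros t Ht. assert (Hq := Hp ((1/2) * t + 0) ltac:(lra)). unfold concat in Hq.
      destruct Rle_dec; [|lra]. replace (2 * (1 / 2 * t + 0)) with t in Hq by field. exact Hq.
    + f_equal; f_equal; field.
  - exists (fun t => th ((1/2) * t + 1/2)). split; [split|].
    + apply cont_on_affine; auto. rewrite Rabs_right; lra. intros; lra.
    + intros t Ht. assert (Hq := Hp ((1/2) * t + 1/2) ltac:(lra)). unfold concat in Hq.
      destruct Rle_dec.
      * assert (t = 0) by lra. subst t.
        replace (2 * (1 / 2 * 0 + 1 / 2)) with 1 in Hq by field. rewrite Hj in Hq. exact Hq.
      * replace (2 * (1 / 2 * t + 1 / 2) - 1) with t in Hq by field. exact Hq.
    + replace (1 / 2 * 1 + 1 / 2) with 1 by field.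
      replace (1 / 2 * 0 + 1 / 2) with (1/2) by field. auto.
Qed.

Lemma angle_change_reverse b u c g v : angle_change b u c g v ->
  angle_change b u c (reverse g) (- v).
Proof.
  intros [th [[Hc Hp] Hv]]. exists (fun t => th ((-1) * t + 1)). split; [split|].
  - apply cont_on_affine; auto. rewrite Rabs_left; lra. intros; lra.
  - intros t Ht. unfold reverse. replace (1 - t) with (-1 * t + 1) by ring. apply Hp; lra.
  - replace (-1 * 1 + 1) with 0 by ring. replace (-1 * 0 + 1) with 1 by ring. lra.
Qed.

Lemma misses_center_stereo b u q L : on_S2 b -> dot u u = 1 -> dot u b = 0 ->
  on_S2 q -> q <> b -> is_path L ->
  (forall t, 0 <= t <= 1 -> L t <> b) -> (forall t, 0 <= t <= 1 -> L t <> q) ->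
  misses_center b u (stereo b q) L.
Proof.
  intros Hb Hu Hub Hq Hqb [HS _] HLb HLq t Ht.
  assert (Hperp : dot (vsub (stereo b (L t)) (stereo b q)) b = 0)
    by (apply vsub_perp; apply stereo_perp; auto).
  unfold chart_x, chart_y. rewrite <- (dot_self_frame _ u b Hu Hb Hub Hperp).
  assert (H1 : dot (L t) b < 1) by (apply sphere_dot_lt; auto).
  assert (H2 : dot q b < 1) by (apply sphere_dot_lt; auto).
  rewrite stereo_dist_sq by auto.
  apply Rdiv_lt_0_compat; [apply dot_vsub_pos; auto|nra].
Qed.

(** * Loops disjoint from a path to the pole have winding number zero *)

Lemma angle_lift_transfer b u c L (B1 B2 th : R -> R) : is_path L ->
  (forall t, 0 <= t <= 1 -> dot (L t) b < 1) -> continuity B1 -> continuity B2 ->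
  cont_on 0 1 th -> (forall t, 0 <= t <= 1 -> polar (B1 t) (B2 t) (th t)) ->
  (forall t, 0 <= t <= 1 ->
     chart_x b u c (L t) * B1 t + chart_y b u c (L t) * B2 t > 0) ->
  angle_lift b u c L
    (fun t => th t + angle_diff (chart_x b u c (L t)) (chart_y b u c (L t)) (B1 t) (B2 t)).
Proof.
  intros HL Hb HB1 HB2 Hth Hpol Hre. split.
  - apply cont_on_plus; auto.
    apply cont_on_ext with (fun t => angle_diff (chart_x b u c (path_clamp L t))
      (chart_y b u c (path_clamp L t)) (B1 t) (B2 t)).
    { intros t Ht. unfold path_clamp. rewrite clamp_id; auto. }
    apply cont_on_of_continuity_pt. intros t Ht.
    destruct (chart_continuous L b u c HL Hb) as [C1 C2].
    unfold angle_diff. apply cpt_comp; [|apply cpt_atan].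
    apply cpt_div; [| |assert (H := Hre t Ht); unfold path_clamp; rewrite clamp_id by lra; lra];
      repeat first [apply cpt_minus | apply cpt_plus | apply cpt_mult]; auto.
  - intros t Ht. apply polar_add_angle_diff; auto.
    assert (H := Hre t Ht).
    destruct (Req_dec (B1 t) 0) as [E1|]; [destruct (Req_dec (B2 t) 0) as [E2|]|];
      [rewrite E1, E2 in H; lra|nra|nra].
Qed.

(* The new lift is the old one plus the (continuous, periodic along the loop)
   angle between the two views of each point. *)
Lemma angle_change_recenter b u c0 c L v : is_path L ->
  (forall t, 0 <= t <= 1 -> dot (L t) b < 1) -> L 0 = L 1 ->
  (forall t, 0 <= t <= 1 -> chart_x b u c (L t) * chart_x b u c0 (L t)
                           + chart_y b u c (L t) * chart_y b u c0 (L t) > 0) ->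
  angle_change b u c0 L v -> angle_change b u c L v.
Proof.
  intros HL Hb Hl Hre [th [[Cth Pth] Ev]].
  destruct (chart_continuous L b u c0 HL Hb) as [C1 C2].
  assert (Hcl : forall t, 0 <= t <= 1 -> path_clamp L t = L t)
    by (intros; unfold path_clamp; rewrite clamp_id; auto).
  eexists. split.
  - apply (angle_lift_transfer b u c L _ _ th HL Hb C1 C2 Cth).
    + intros t Ht. rewrite Hcl; auto.
    + intros t Ht. rewrite Hcl; auto.
  - cbv beta. rewrite !Hcl, Hl by lra. lra.
Qed.

Definition O3 : pt := (0, 0, 0).

(* A centre far outside the (compact) image of the loop sees it under an acute
   angular range, so the angle change vanishes. *)
Lemma angle_change_far_center b u c L Mx : is_path L ->
  (forall t, 0 <= t <= 1 -> dot (L t) b < 1) -> L 0 = L 1 ->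
  (forall t, 0 <= t <= 1 -> chart_x b u O3 (L t) * chart_x b u O3 (L t)
                           + chart_y b u O3 (L t) * chart_y b u O3 (L t) <= Mx) ->
  dot c u * dot c u + dot c (frame_w b u) * dot c (frame_w b u) > 2 * Mx + 1 ->
  angle_change b u c L 0.
Proof.
  intros HL Hb Hl HM HC.
  set (C1 := dot c u) in *. set (C2 := dot c (frame_w b u)) in *.
  assert (HM0 : 0 <= Mx).
  { specialize (HM 0 ltac:(lra)). assert (A := Rle_0_sqr (chart_x b u O3 (L 0))).
    assert (B := Rle_0_sqr (chart_y b u O3 (L 0))). unfold Rsqr in *. lra. }
  assert (HO : forall p, chart_x b u c p = chart_x b u O3 p - C1 /\
                         chart_y b u c p = chart_y b u O3 p - C2).
  { intro p. destruct (chart_shift b u c O3 p) as [E1 E2]. rewrite E1, E2.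
    unfold O3, C1, C2, frame_w. split; destruct_pts; ring. }
  assert (Hre : forall t, 0 <= t <= 1 ->
            chart_x b u c (L t) * (- C1) + chart_y b u c (L t) * (- C2) > 0).
  { intros t Ht. destruct (HO (L t)) as [-> ->]. specialize (HM t Ht).
    set (a1 := chart_x b u O3 (L t)) in *. set (a2 := chart_y b u O3 (L t)) in *.
    assert (A1 : 0 <= (C1 / 2 - a1) * (C1 / 2 - a1)) by apply Rle_0_sqr.
    assert (A2 : 0 <= (C2 / 2 - a2) * (C2 / 2 - a2)) by apply Rle_0_sqr.
    nra. }
  destruct (polar_exists (- C1) (- C2)) as [thC HthC]; [nra|].
  eexists. split.
  - apply (angle_lift_transfer b u c L (fun _ => - C1) (fun _ => - C2) (fun _ => thC)); auto;
      try (intro; apply cpt_const).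
    intros t Ht e He. exists 1. split; [lra|]. intros. unfold Rminus.
    rewrite Rplus_opp_r, Rabs_R0. lra.
  - cbv beta. rewrite Hl. ring.
Qed.

Lemma angle_change_center_stable b u c0 L : is_path L ->
  (forall t, 0 <= t <= 1 -> dot (L t) b < 1) -> L 0 = L 1 -> misses_center b u c0 L ->
  exists e, e > 0 /\ forall c v,
    Rabs (dot c u - dot c0 u) < e -> Rabs (dot c (frame_w b u) - dot c0 (frame_w b u)) < e ->
    angle_change b u c0 L v -> angle_change b u c L v.
Proof.
  intros HL Hb Hl Hmiss.
  destruct (chart_continuous L b u c0 HL Hb) as [CX CY].
  destruct (continuity_ab_min (fun t =>
        chart_x b u c0 (path_clamp L t) * chart_x b u c0 (path_clamp L t)
      + chart_y b u c0 (path_clamp L t) * chart_y b u c0 (path_clamp L t)) 0 1)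
    as [mx [Hmin Hmx]]; [lra|intros; apply cpt_plus; apply cpt_mult; auto|].
  simpl in Hmin. unfold path_clamp in Hmin. rewrite (clamp_id 0 1 mx Hmx) in Hmin.
  set (m := chart_x b u c0 (L mx) * chart_x b u c0 (L mx)
          + chart_y b u c0 (L mx) * chart_y b u c0 (L mx)) in *.
  assert (Hm : m > 0) by (apply Hmiss; auto).
  exists (Rmin 1 (m / 4)). split; [unfold Rmin; destruct Rle_dec; lra|].
  intros c v Hu Hw. apply (angle_change_recenter b u c0 c L v HL Hb Hl).
  intros t Ht. destruct (chart_shift b u c c0 (L t)) as [-> ->].
  apply inner_pos_of_close with m; auto.
  specialize (Hmin t Ht). rewrite clamp_id in Hmin by lra. lra.
Qed.

Lemma path_first_hit al b : is_path al -> al 0 <> b -> al 1 = b ->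
  exists ss, 0 < ss <= 1 /\ al ss = b /\ forall r, 0 <= r < ss -> al r <> b.
Proof.
  intros [_ Halc] Ha0 Ha1.
  set (T := fun s => 0 <= s <= 1 /\ forall r, 0 <= r <= s -> al r <> b).
  assert (T0 : T 0) by (split; [lra|]; intros r Hr; replace r with 0 by lra; auto).
  destruct (completeness T) as [ss [Hub Hlub]]; [exists 1; intros x [Hx _]; lra|exists 0; auto|].
  assert (Hss0 : 0 <= ss) by (apply Hub; auto).
  assert (Hss1 : ss <= 1) by (apply Hlub; intros x [Hx _]; lra).
  assert (Hbefore : forall r, 0 <= r < ss -> al r <> b).
  { intros r Hr E. assert (ss <= r); [|lra]. apply Hlub. intros x [Hx Hx2].
    destruct (Rle_lt_dec x r) as [|Hlt]; auto. exfalso. apply (Hx2 r); auto. lra. }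
  assert (Hat : al ss = b).
  { apply NNPP. intro Hne.
    destruct (Req_dec ss 1) as [E|Hs1]; [subst ss; congruence|].
    assert (Hd0 : dist3 (al ss) b > 0)
      by (unfold dist3, vnorm; apply sqrt_lt_R0, dot_vsub_pos; auto).
    destruct (Halc ss ltac:(unfold unit_int; lra) _ Hd0) as [d [Hd Hc]].
    set (s' := Rmin 1 (ss + d / 2)).
    assert (Hs' : ss < s' <= 1) by (unfold s', Rmin; destruct Rle_dec; lra).
    assert (s' <= ss); [|lra]. apply Hub. split; [lra|].
    intros r Hr E. destruct (Rlt_le_dec r ss) as [Hlt|Hge]; [apply (Hbefore r); auto; lra|].
    assert (Hcr := Hc r ltac:(unfold unit_int; lra)
      ltac:(unfold s', Rmin in *; destruct Rle_dec; rewrite Rabs_right; lra)).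
    rewrite E in Hcr. lra. }
  exists ss. split; [|split; auto].
  destruct (Req_dec ss 0) as [E|]; [rewrite E in Hat; congruence|lra].
Qed.

Lemma stereo_norm_large b M : on_S2 b -> exists eps, eps > 0 /\ forall p, on_S2 p ->
  p <> b -> dist3 p b < eps -> dot (stereo b p) (stereo b p) > M.
Proof.
  intros Hb. set (K := Rabs M + 1).
  assert (HM := Rle_abs M).
  assert (HK : K > 0) by (unfold K; assert (0 <= Rabs M) by apply Rabs_pos; lra).
  set (eps := Rmin 1 (/ K)).
  assert (Heps : 0 < eps <= 1 /\ eps * K <= 1).
  { assert (0 < / K) by (apply Rinv_0_lt_compat; lra).
    assert (eps <= / K) by apply Rmin_r. assert (eps <= 1) by apply Rmin_l.
    assert (HeK : eps * K <= / K * K) by (apply Rmult_le_compat_r; lra).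
    rewrite Rinv_l in HeK by lra. split; [split|]; auto.
    unfold eps, Rmin; destruct Rle_dec; lra. }
  exists eps. split; [lra|]. intros p Hp Hpb Hd.
  apply dist3_lt_sq in Hd. rewrite sphere_sub_sq in Hd by auto.
  assert (Hlt : dot p b < 1) by (apply sphere_dot_lt; auto).
  rewrite stereo_norm_sq by auto.
  set (x := 1 - dot p b) in *. replace (1 + dot p b) with (2 - x) by (unfold x; ring).
  assert (Hx : 0 < x) by (unfold x; lra).
  assert (Hx2 : x * K < 1 / 2) by (unfold x in *; nra).
  apply (Rmult_lt_reg_r x); auto. unfold Rdiv. rewrite Rmult_assoc, Rinv_l by lra.
  unfold K in Hx2. nra.
Qed.

(* Homotopy invariance: the angle change of a fixed loop is locally constant
   in the centre, and takes values in [2 PI Z]. *)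
Lemma angle_change_along_centers b u (c : R -> pt) L s1 : 0 <= s1 -> L 0 = L 1 ->
  (forall s, 0 <= s <= s1 -> misses_center b u (c s) L) ->
  (forall s, 0 <= s <= s1 -> exists v, angle_change b u (c s) L v) ->
  (forall s0, 0 <= s0 <= s1 -> exists d, d > 0 /\ forall s, 0 <= s <= s1 -> Rabs (s - s0) < d ->
     forall v, angle_change b u (c s0) L v -> angle_change b u (c s) L v) ->
  forall v0 v1, angle_change b u (c 0) L v0 -> angle_change b u (c s1) L v1 -> v0 = v1.
Proof.
  intros Hs1 Hl Hmiss Hex Hloc v0 v1 W0 W1.
  set (N := fun s => epsilon (inhabits 0) (fun v => angle_change b u (c s) L v)).
  assert (HN : forall s, 0 <= s <= s1 -> angle_change b u (c s) L (N s))
    by (intros s Hs; apply epsilon_spec, Hex; auto).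
  assert (Hcont : cont_on 0 s1 N).
  { intros t Ht e He. destruct (Hloc t Ht) as [d [Hd Hd2]]. exists d; split; auto.
    intros s Hs Hst.
    replace (N s) with (N t); [unfold Rminus; rewrite Rplus_opp_r, Rabs_R0; lra|].
    apply (angle_change_unique b u (c s) L); auto. }
  assert (E : N s1 = N 0).
  { apply cont_on_multiple_PI_const; auto. intros t Ht.
    destruct (angle_change_loop b u (c t) L (N t)) as [k Hk]; auto.
    exists (2 * k)%Z. rewrite Hk, mult_IZR. ring. }
  assert (A0 := angle_change_unique _ _ _ _ _ _ (Hmiss 0 ltac:(lra)) W0 (HN 0 ltac:(lra))).
  assert (A1 := angle_change_unique _ _ _ _ _ _ (Hmiss s1 ltac:(lra)) W1 (HN s1 ltac:(lra))).
  lra.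
Qed.

Lemma dist3_sym p q : dist3 p q = dist3 q p.
Proof. unfold dist3, vnorm. f_equal. destruct_pts. ring. Qed.

Lemma angle_change_zero_near_pole b u al L ss : on_S2 b -> dot u u = 1 -> dot u b = 0 ->
  is_path al -> is_path L -> L 0 = L 1 -> (forall t, 0 <= t <= 1 -> dot (L t) b < 1) ->
  0 < ss <= 1 -> al ss = b -> (forall r, 0 <= r < ss -> al r <> b) ->
  exists s1, 0 <= s1 < ss /\ angle_change b u (stereo b (al s1)) L 0.
Proof.
  intros Hb Hu Hub Hal HL Hl HLd Hss Hat Hbefore.
  destruct (chart_continuous L b u O3 HL HLd) as [AX AY].
  destruct (continuity_ab_maj (fun t =>
        chart_x b u O3 (path_clamp L t) * chart_x b u O3 (path_clamp L t)
      + chart_y b u O3 (path_clamp L t) * chart_y b u O3 (path_clamp L t)) 0 1)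
    as [mxp [Hmax Hmxp]]; [lra|intros; apply cpt_plus; apply cpt_mult; auto|].
  set (Mx := chart_x b u O3 (path_clamp L mxp) * chart_x b u O3 (path_clamp L mxp)
      + chart_y b u O3 (path_clamp L mxp) * chart_y b u O3 (path_clamp L mxp)) in *.
  destruct (stereo_norm_large b (2 * Mx + 1) Hb) as [eps [Heps Hlarge]].
  destruct (proj2 Hal ss ltac:(unfold unit_int; lra) eps Heps) as [d [Hd Hc]].
  set (s1 := ss - Rmin d ss / 2).
  assert (Hmn : 0 < Rmin d ss <= ss /\ Rmin d ss <= d) by (unfold Rmin; destruct Rle_dec; lra).
  exists s1. split; [unfold s1; lra|].
  apply (angle_change_far_center b u _ L Mx HL HLd Hl).
  - intros t Ht. specialize (Hmax t Ht). unfold path_clamp in Hmax.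
    rewrite clamp_id in Hmax by lra. exact Hmax.
  - rewrite <- (dot_self_frame _ u b Hu Hb Hub) by (apply stereo_perp; auto).
    apply Hlarge; [apply Hal; unfold unit_int, s1; lra|apply Hbefore; unfold s1; lra|].
    rewrite dist3_sym, <- Hat. apply Hc; [unfold unit_int, s1; lra|].
    unfold s1. rewrite Rabs_left; lra.
Qed.

Lemma angle_change_locally_const_along_path b u al L s0 : on_S2 b -> dot u u = 1 -> dot u b = 0 ->
  is_path al -> is_path L -> L 0 = L 1 -> (forall t, 0 <= t <= 1 -> dot (L t) b < 1) ->
  0 <= s0 <= 1 -> al s0 <> b -> misses_center b u (stereo b (al s0)) L ->
  exists d, d > 0 /\ forall s, 0 <= s <= 1 -> Rabs (s - s0) < d -> forall v,
    angle_change b u (stereo b (al s0)) L v -> angle_change b u (stereo b (al s)) L v.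
Proof.
  intros Hb Hu Hub Hal HL Hl HLd Hs0 Hne Hmiss.
  destruct (angle_change_center_stable b u _ L HL HLd Hl Hmiss) as [e [He Hstab]].
  destruct (path_coords_continuous al Hal) as [A1 [A2 A3]].
  assert (Hd0 : dot (path_clamp al s0) b < 1).
  { unfold path_clamp. rewrite clamp_id by lra. apply sphere_dot_lt; auto. apply Hal. exact Hs0. }
  destruct (eps_of_continuity_pt _ _ (cpt_stereo_dot _ b u s0 A1 A2 A3 Hd0) e He)
    as [d1 [Hd1 E1]].
  destruct (eps_of_continuity_pt _ _ (cpt_stereo_dot _ b (frame_w b u) s0 A1 A2 A3 Hd0) e He)
    as [d2 [Hd2 E2]].
  exists (Rmin d1 d2). split; [unfold Rmin; destruct Rle_dec; lra|].
  intros s Hs Hss v. apply Hstab.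
  - assert (B := E1 s ltac:(eapply Rlt_le_trans; [exact Hss|apply Rmin_l])).
    unfold path_clamp in B. rewrite !clamp_id in B by lra. exact B.
  - assert (B := E2 s ltac:(eapply Rlt_le_trans; [exact Hss|apply Rmin_r])).
    unfold path_clamp in B. rewrite !clamp_id in B by lra. exact B.
Qed.

(* Slide the centre along [al] towards the projection pole [b]: the angle
   change stays constant and eventually vanishes because the centre goes to
   infinity. *)
Lemma angle_change_zero_of_disjoint_path b u a al L v :
  on_S2 b -> dot u u = 1 -> dot u b = 0 ->
  is_path al -> al 0 = a -> al 1 = b -> a <> b -> is_path L -> L 0 = L 1 ->
  (forall s t, 0 <= s <= 1 -> 0 <= t <= 1 -> L t <> al s) ->
  angle_change b u (stereo b a) L v -> v = 0.
Proof.
  intros Hb Hu Hub Hal Ha0 Ha1 Hab HL Hl Hav Hw.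
  assert (HLb : forall t, 0 <= t <= 1 -> L t <> b)
    by (intros t Ht; rewrite <- Ha1; apply Hav; lra).
  assert (HLd : forall t, 0 <= t <= 1 -> dot (L t) b < 1)
    by (intros t Ht; apply sphere_dot_lt; auto; apply HL; auto).
  destruct (path_first_hit al b Hal ltac:(congruence) Ha1) as [ss [Hss [Hat Hbefore]]].
  assert (Hmiss : forall s, 0 <= s < ss -> misses_center b u (stereo b (al s)) L).
  { intros s Hs. apply misses_center_stereo; auto; [apply Hal; unfold unit_int; lra|].
    intros t Ht. apply Hav; auto; lra. }
  destruct (angle_change_zero_near_pole b u al L ss Hb Hu Hub Hal HL Hl HLd Hss Hat Hbefore)
    as [s1 [Hs1 W1]].
  apply (angle_change_along_centers b u (fun s => stereo b (al s)) L s1); auto; try lra.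
  - intros s Hs. apply Hmiss. lra.
  - intros s Hs. apply angle_change_exists; auto. apply Hmiss; lra.
  - intros s0 Hs0.
    destruct (angle_change_locally_const_along_path b u al L s0) as [d [Hd Hloc]]; auto;
      try lra; [apply Hbefore; lra|apply Hmiss; lra|].
    exists d. split; auto. intros s Hs. apply Hloc. lra.
  - rewrite Ha0. exact Hw.
Qed.

(** * Paths on the sphere and the chart of [S^2 \ {x1, x2}] *)

Lemma concat_path d g : is_path d -> is_path g -> d 1 = g 0 -> is_path (concat d g).
Proof.
  intros [Sd Cd] [Sg Cg] Hj. unfold unit_int in *. split.
  - intros t Ht. unfold concat. destruct Rle_dec; [apply Sd|apply Sg]; unfold unit_int in *; lra.
  - intros t Ht e He. unfold concat. unfold unit_int in Ht.
    destruct (Rtotal_order t (1/2)) as [Hlt|[Heq|Hgt]].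
    + destruct (Cd (2 * t) ltac:(unfold unit_int; lra) e He) as [d1 [Hd1 H1]].
      exists (Rmin (d1 / 2) (1/2 - t)). split; [unfold Rmin; destruct Rle_dec; lra|].
      intros s Hs Hst. unfold unit_int in Hs.
      assert (A : Rabs (s - t) < d1 / 2) by (eapply Rlt_le_trans; [exact Hst|apply Rmin_l]).
      assert (B : Rabs (s - t) < 1/2 - t) by (eapply Rlt_le_trans; [exact Hst|apply Rmin_r]).
      apply Rabs_def2 in A. apply Rabs_def2 in B.
      destruct (Rle_dec t (1/2)); [|lra]. destruct (Rle_dec s (1/2)); [|lra].
      apply H1; [unfold unit_int; lra|]. apply Rabs_def1; lra.
    + subst t. destruct (Cd 1 ltac:(unfold unit_int; lra) e He) as [d1 [Hd1 H1]].
      destruct (Cg 0 ltac:(unfold unit_int; lra) e He) as [d2 [Hd2 H2]].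
      exists (Rmin (d1 / 2) (d2 / 2)). split; [unfold Rmin; destruct Rle_dec; lra|].
      intros s Hs Hst. unfold unit_int in Hs.
      assert (A : Rabs (s - 1/2) < d1 / 2) by (eapply Rlt_le_trans; [exact Hst|apply Rmin_l]).
      assert (B : Rabs (s - 1/2) < d2 / 2) by (eapply Rlt_le_trans; [exact Hst|apply Rmin_r]).
      apply Rabs_def2 in A. apply Rabs_def2 in B.
      destruct (Rle_dec (1/2) (1/2)); [|lra]. replace (2 * (1/2)) with 1 by field.
      destruct (Rle_dec s (1/2)).
      * apply H1; [unfold unit_int; lra|]. apply Rabs_def1; lra.
      * rewrite Hj. apply H2; [unfold unit_int; lra|]. apply Rabs_def1; lra.
    + destruct (Cg (2 * t - 1) ltac:(unfold unit_int; lra) e He) as [d1 [Hd1 H1]].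
      exists (Rmin (d1 / 2) (t - 1/2)). split; [unfold Rmin; destruct Rle_dec; lra|].
      intros s Hs Hst. unfold unit_int in Hs.
      assert (A : Rabs (s - t) < d1 / 2) by (eapply Rlt_le_trans; [exact Hst|apply Rmin_l]).
      assert (B : Rabs (s - t) < t - 1/2) by (eapply Rlt_le_trans; [exact Hst|apply Rmin_r]).
      apply Rabs_def2 in A. apply Rabs_def2 in B.
      destruct (Rle_dec t (1/2)); [lra|]. destruct (Rle_dec s (1/2)); [lra|].
      apply H1; [unfold unit_int; lra|]. apply Rabs_def1; lra.
Qed.

Lemma reverse_path g : is_path g -> is_path (reverse g).
Proof.
  intros [Sg Cg]. unfold reverse, unit_int in *. split.
  - intros t Ht. apply Sg. unfold unit_int in *; lra.
  - intros t Ht e He. destruct (Cg (1 - t) ltac:(unfold unit_int in *; lra) e He) as [d [Hd H]].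
    exists d; split; auto. intros s Hs Hst. apply H; [unfold unit_int in *; lra|].
    replace (1 - s - (1 - t)) with (- (s - t)) by ring. rewrite Rabs_Ropp; auto.
Qed.

Lemma homeo_comp_path F g : homeo_S2 F -> is_path g -> is_path (fun t => F (g t)).
Proof.
  intros [FS [FC _]] [Sg Cg]. split.
  - intros t Ht. apply FS, Sg, Ht.
  - intros t Ht e He. destruct (FC (g t) (Sg t Ht) e He) as [d1 [Hd1 H1]].
    destruct (Cg t Ht d1 Hd1) as [d2 [Hd2 H2]].
    exists d2; split; auto.
Qed.

Lemma homeo_inj F x y : homeo_S2 F -> on_S2 x -> on_S2 y -> F x = F y -> x = y.
Proof.
  intros [_ [_ [G [_ [_ [HGF _]]]]]] Hx Hy E. rewrite <- (HGF x Hx), <- (HGF y Hy), E. auto.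
Qed.

Lemma homeo_comp F G : homeo_S2 F -> homeo_S2 G -> homeo_S2 (fun x => F (G x)).
Proof.
  intros [FS [FC [F' [F'S [F'C [F1 F2]]]]]] [GS [GC [G' [G'S [G'C [G1 G2]]]]]].
  split; [intros; auto|]. split.
  - intros x Hx e He. destruct (FC (G x) (GS x Hx) e He) as [d1 [Hd1 H1]].
    destruct (GC x Hx d1 Hd1) as [d2 [Hd2 H2]]. exists d2; split; auto.
  - exists (fun x => G' (F' x)). split; [intros; auto|]. split.
    + intros x Hx e He. destruct (G'C (F' x) (F'S x Hx) e He) as [d1 [Hd1 H1]].
      destruct (F'C x Hx d1 Hd1) as [d2 [Hd2 H2]]. exists d2; split; auto.
    + split; intros x Hx.
      * rewrite F1; auto.
      * rewrite G2; auto.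
Qed.

Lemma concat_map F d g : (fun t => F (concat d g t)) = concat (fun t => F (d t)) (fun t => F (g t)).
Proof. apply functional_extensionality. intro t. unfold concat. destruct Rle_dec; auto. Qed.

Lemma concat_0 d g : concat d g 0 = d 0.
Proof. unfold concat. destruct Rle_dec; [|lra]. f_equal; ring. Qed.
Lemma concat_1 d g : concat d g 1 = g 1.
Proof. unfold concat. destruct Rle_dec; [lra|]. f_equal; ring. Qed.

Lemma reverse_concat_path d1 d2 : is_path d1 -> is_path d2 -> d1 0 = d2 0 ->
  is_path (concat (reverse d1) d2).
Proof.
  intros P1 P2 E. apply concat_path; [apply reverse_path; auto|auto|].
  unfold reverse. replace (1 - 1) with 0 by ring. auto.
Qed.

Definition four_points (x1 x2 x3 x4 : pt) := on_S2 x1 /\ on_S2 x2 /\ on_S2 x3 /\ on_S2 x4 /\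
  x1 <> x2 /\ x1 <> x3 /\ x1 <> x4 /\ x2 <> x3 /\ x2 <> x4 /\ x3 <> x4.

(* The chart in which the homology class of a loop in [S^2 \ {x1, x2}] is read
   off, as in [wind x1 x2]: stereographic projection from [x2], centred at the
   image of [x1], with angles measured from the direction of [x4]. *)
Definition chart_dir x1 x2 x4 := normalize (Fab x1 x2 x4).
Definition chart_angle x1 x2 x4 g v := angle_change x2 (chart_dir x1 x2 x4) (stereo x2 x1) g v.

Definition avoids2 (x1 x2 : pt) (g : R -> pt) := forall t, 0 <= t <= 1 -> g t <> x1 /\ g t <> x2.

Lemma chart_dir_unit x1 x2 x3 x4 : four_points x1 x2 x3 x4 ->
  dot (chart_dir x1 x2 x4) (chart_dir x1 x2 x4) = 1 /\ dot (chart_dir x1 x2 x4) x2 = 0.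
Proof.
  intros (H1 & H2 & H3 & H4 & D12 & D13 & D14 & D23 & D24 & D34).
  set (F := Fab x1 x2 x4).
  assert (HF : dot F F > 0).
  { unfold F, Fab.
    assert (A1 : dot x4 x2 < 1) by (apply sphere_dot_lt; auto).
    assert (A2 : dot x1 x2 < 1) by (apply sphere_dot_lt; auto).
    rewrite (stereo_dist_sq x2 x4 x1 H2 H4 H1 A1 A2). apply Rdiv_lt_0_compat.
    apply dot_vsub_pos; auto. nra. }
  assert (HFb : dot F x2 = 0) by (unfold F, Fab; apply vsub_perp; apply stereo_perp; auto).
  split.
  - apply normalize_S2. fold F. intro E. rewrite E in HF. unfold dot in HF. simpl in HF. lra.
  - unfold chart_dir, normalize. fold F. rewrite dot_vscale, HFb. ring.
Qed.

Lemma chart_misses_center x1 x2 x3 x4 g : four_points x1 x2 x3 x4 -> is_path g ->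
  avoids2 x1 x2 g -> misses_center x2 (chart_dir x1 x2 x4) (stereo x2 x1) g /\
  (forall t, 0 <= t <= 1 -> dot (g t) x2 < 1).
Proof.
  intros Hc Hg Ha. destruct (chart_dir_unit _ _ _ _ Hc) as [U1 U2].
  destruct Hc as (H1 & H2 & H3 & H4 & D12 & D13 & D14 & D23 & D24 & D34).
  split.
  - apply misses_center_stereo; auto; intros t Ht; apply Ha; auto.
  - intros t Ht. apply sphere_dot_lt; [apply Hg; auto|auto|apply Ha; auto].
Qed.

Lemma chart_angle_exists x1 x2 x3 x4 g : four_points x1 x2 x3 x4 -> is_path g ->
  avoids2 x1 x2 g -> exists v, chart_angle x1 x2 x4 g v.
Proof.
  intros Hc Hg Ha. destruct (chart_misses_center _ _ _ _ g Hc Hg Ha) as [G1 G2].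
  apply angle_change_exists; auto.
Qed.

Lemma chart_angle_unique x1 x2 x3 x4 g v1 v2 : four_points x1 x2 x3 x4 -> is_path g ->
  avoids2 x1 x2 g -> chart_angle x1 x2 x4 g v1 -> chart_angle x1 x2 x4 g v2 -> v1 = v2.
Proof.
  intros Hc Hg Ha. destruct (chart_misses_center _ _ _ _ g Hc Hg Ha) as [G1 G2].
  apply angle_change_unique; auto.
Qed.

Lemma wind_chart_angle x1 x2 x3 x4 g k : four_points x1 x2 x3 x4 -> g 0 = x4 ->
  (wind x1 x2 g k <-> chart_angle x1 x2 x4 g (2 * PI * IZR k)).
Proof.
  intros Hc Hg0. destruct (chart_dir_unit _ _ _ _ Hc) as [U1 U2].
  assert (Hb : dot x2 x2 = 1) by apply Hc.
  assert (HP : forall t, dot (Fab x1 x2 (g t)) x2 = 0)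
    by (intro t; unfold Fab; apply vsub_perp; apply stereo_perp; auto).
  assert (Hpol : forall th t, Fab x1 x2 (g t) = vscale (vnorm (Fab x1 x2 (g t)))
      (vadd (vscale (cos th) (chart_dir x1 x2 x4))
            (vscale (sin th) (cross (vscale (-1) x2) (chart_dir x1 x2 x4))))
    <-> polar (chart_x x2 (chart_dir x1 x2 x4) (stereo x2 x1) (g t))
              (chart_y x2 (chart_dir x1 x2 x4) (stereo x2 x1) (g t)) th)
    by (intros; apply frame_polar; auto).
  unfold wind, chart_angle, angle_change, angle_lift. cbv zeta. rewrite Hg0.
  fold (normalize (Fab x1 x2 x4)). fold (chart_dir x1 x2 x4).
  split.
  - intros [th [Hc1 [Hr Hd]]]. exists th. split; [split|]; auto.
    intros t Ht. apply Hpol, Hr, Ht.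
  - intros [th [[Hc1 Hr] Hd]]. exists th. split; [|split]; auto.
    intros t Ht. apply Hpol, Hr, Ht.
Qed.

Lemma avoids2_reverse x1 x2 g : avoids2 x1 x2 g -> avoids2 x1 x2 (reverse g).
Proof. intros H t Ht. unfold reverse. apply H. lra. Qed.

Lemma avoids2_concat x1 x2 d g : avoids2 x1 x2 d -> avoids2 x1 x2 g ->
  avoids2 x1 x2 (concat d g).
Proof. intros H1 H2 t Ht. unfold concat. destruct Rle_dec; [apply H1|apply H2]; lra. Qed.

Lemma avoids2_homeo F x1 x2 g : homeo_S2 F -> on_S2 x1 -> on_S2 x2 -> F x1 = x1 ->
  F x2 = x2 -> is_path g -> avoids2 x1 x2 g -> avoids2 x1 x2 (fun t => F (g t)).
Proof.
  intros HF H1 H2 F1 F2 Hg Ha t Ht. destruct (Ha t Ht) as [A B]. split; intro E.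
  - apply A. apply (homeo_inj F); auto. apply Hg; auto. congruence.
  - apply B. apply (homeo_inj F); auto. apply Hg; auto. congruence.
Qed.

Lemma adm_beta_avoids2 x1 x2 x3 x4 b : adm_beta x1 x2 x3 x4 b -> avoids2 x1 x2 b.
Proof. intros [_ [_ [_ [A B]]]] t Ht. split; [apply A|apply B]; auto. Qed.

Lemma adm_beta_homeo F x1 x2 x3 x4 b : four_points x1 x2 x3 x4 -> homeo_S2 F ->
  F x1 = x1 -> F x2 = x2 -> F x3 = x3 -> F x4 = x4 ->
  adm_beta x1 x2 x3 x4 b -> adm_beta x1 x2 x3 x4 (fun t => F (b t)).
Proof.
  intros Hc HF F1 F2 F3 F4 Hb. assert (Av := adm_beta_avoids2 _ _ _ _ _ Hb).
  destruct Hb as [P [B0 [B1 _]]].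
  assert (A := avoids2_homeo F x1 x2 b HF ltac:(apply Hc) ltac:(apply Hc) F1 F2 P Av).
  split; [apply homeo_comp_path; auto|]. split; [rewrite B0; auto|]. split; [rewrite B1; auto|].
  split; intros t Ht; apply A; auto.
Qed.

Lemma chart_angle_reverse_concat x1 x2 x3 x4 d1 d2 a1 a2 v : four_points x1 x2 x3 x4 ->
  is_path d1 -> is_path d2 -> avoids2 x1 x2 d1 -> avoids2 x1 x2 d2 -> d1 0 = d2 0 ->
  chart_angle x1 x2 x4 d1 a1 -> chart_angle x1 x2 x4 d2 a2 ->
  chart_angle x1 x2 x4 (concat (reverse d1) d2) v -> v = a2 - a1.
Proof.
  intros Hc P1 P2 A1 A2 E W1 W2 W.
  destruct (angle_change_concat x2 (chart_dir x1 x2 x4) (stereo x2 x1) (reverse d1) d2 v)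
    as [b1 [b2 [B1 [B2 B]]]]; auto.
  { unfold reverse. replace (1 - 1) with 0 by ring. auto. }
  assert (b1 = - a1).
  { apply (chart_angle_unique x1 x2 x3 x4 (reverse d1)); auto;
      [apply reverse_path|apply avoids2_reverse|apply angle_change_reverse]; auto. }
  assert (b2 = a2) by (apply (chart_angle_unique x1 x2 x3 x4 d2); auto).
  lra.
Qed.

Lemma chart_angle_loop x1 x2 x3 x4 M : four_points x1 x2 x3 x4 -> is_path M ->
  avoids2 x1 x2 M -> M 0 = x4 -> M 1 = x4 ->
  exists k, chart_angle x1 x2 x4 M (2 * PI * IZR k) /\ wind x1 x2 M k.
Proof.
  intros Hc PM AvM M0 M1.
  destruct (chart_angle_exists _ _ _ _ M Hc PM AvM) as [vM WM].
  destruct (chart_misses_center _ _ _ _ M Hc PM AvM) as [GM _].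
  destruct (angle_change_loop _ _ _ _ _ GM ltac:(congruence) WM) as [k Hk].
  exists k. rewrite Hk in WM. split; auto. apply (wind_chart_angle x1 x2 x3 x4); auto.
Qed.

(* The loop [delta1^-1 delta2] is disjoint from [alpha], which joins [x1] to the
   projection pole [x2]: its winding number is zero. *)
Lemma chart_angle_delta_indep x1 x2 x3 x4 al d1 d2 a1 a2 : four_points x1 x2 x3 x4 ->
  adm_alpha x1 x2 x3 x4 al ->
  is_path d1 -> d1 0 = x4 -> (forall s t, unit_int s -> unit_int t -> d1 s <> al t) ->
  is_path d2 -> d2 0 = x4 -> d2 1 = d1 1 ->
  (forall s t, unit_int s -> unit_int t -> d2 s <> al t) ->
  chart_angle x1 x2 x4 d1 a1 -> chart_angle x1 x2 x4 d2 a2 -> a1 = a2.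
Proof.
  intros Hc [Hal [Ha0 [Ha1 _]]] P1 S1 A1 P2 S2 E2 A2 W1 W2.
  assert (Av : forall d, (forall s t, unit_int s -> unit_int t -> d s <> al t) -> avoids2 x1 x2 d).
  { intros d Ad t Ht. rewrite <- Ha0, <- Ha1. split; apply Ad; unfold unit_int; lra. }
  set (L := concat (reverse d1) d2).
  assert (HL : is_path L) by (apply reverse_concat_path; congruence).
  assert (AvL : avoids2 x1 x2 L) by (apply avoids2_concat; [apply avoids2_reverse|]; auto).
  destruct (chart_angle_exists _ _ _ _ L Hc HL AvL) as [vL WL].
  destruct (chart_dir_unit _ _ _ _ Hc) as [U1 U2].
  assert (Z : vL = 0).
  { apply (angle_change_zero_of_disjoint_path x2 (chart_dir x1 x2 x4) x1 al L vL); auto;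
      try apply Hc.
    - unfold L. rewrite concat_0, concat_1. unfold reverse. rewrite E2.
      replace (1 - 0) with 1 by ring. auto.
    - intros s t Hs Ht. unfold L, concat, reverse. destruct Rle_dec;
        [apply A1|apply A2]; unfold unit_int; lra. }
  assert (vL = a2 - a1) by (apply (chart_angle_reverse_concat x1 x2 x3 x4 d1 d2); auto; congruence).
  lra.
Qed.

Lemma Rcal_chart_angle F x1 x2 x3 x4 r : four_points x1 x2 x3 x4 -> homeo_S2 F ->
  F x1 = x1 -> F x2 = x2 -> F x3 = x3 -> F x4 = x4 -> Rcal F x1 x2 x3 x4 r ->
  exists b, adm_beta x1 x2 x3 x4 b /\ exists vF vb, chart_angle x1 x2 x4 (fun t => F (b t)) vF /\
    chart_angle x1 x2 x4 b vb /\ 2 * PI * IZR r = vF - vb.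
Proof.
  intros Hc HF F1 F2 F3 F4 [al [b [Ha [Hb [k1 [k2 [I1 [I2 Hr]]]]]]]].
  exists b. split; auto.
  assert (Eb0 : b 0 = x3) by apply Hb.
  destruct I1 as [d1 [P1 [S1 [E1 [A1 WI1]]]]].
  destruct I2 as [d2 [P2 [S2 [E2 [A2 WI2]]]]].
  apply (wind_chart_angle x1 x2 x3 x4) in WI1; auto; [|rewrite concat_0; auto].
  apply (wind_chart_angle x1 x2 x3 x4) in WI2; auto; [|rewrite concat_0; auto].
  destruct (angle_change_concat x2 _ _ d1 (fun t => F (b t)) _ ltac:(rewrite E1, Eb0; auto) WI1)
    as [a1 [c1 [Wa1 [Wc1 Hs1]]]].
  destruct (angle_change_concat x2 _ _ d2 b _ ltac:(rewrite E2, Eb0; auto) WI2)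
    as [a2 [c2 [Wa2 [Wc2 Hs2]]]].
  assert (a1 = a2) by (apply (chart_angle_delta_indep x1 x2 x3 x4 al d1 d2); auto; congruence).
  exists c1, c2. split; auto. split; auto. rewrite Hr, minus_IZR. lra.
Qed.

(* [F] maps the loop [beta^-1 beta'] to [(F beta)^-1 (F beta')] and preserves
   its winding number. *)
Lemma chart_angle_diff_beta_indep F x1 x2 x3 x4 b b' a c a' c' :
  four_points x1 x2 x3 x4 -> homeo_S2 F -> orient_pres F ->
  F x1 = x1 -> F x2 = x2 -> F x3 = x3 -> F x4 = x4 ->
  adm_beta x1 x2 x3 x4 b -> adm_beta x1 x2 x3 x4 b' ->
  chart_angle x1 x2 x4 (fun t => F (b t)) a -> chart_angle x1 x2 x4 b c ->
  chart_angle x1 x2 x4 (fun t => F (b' t)) a' -> chart_angle x1 x2 x4 b' c' -> a - c = a' - c'.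
Proof.
  intros Hc HF HO F1 F2 F3 F4 Hb Hb' Wa Wc Wa' Wc'.
  assert (HFb := adm_beta_homeo F _ _ _ _ b Hc HF F1 F2 F3 F4 Hb).
  assert (HFb' := adm_beta_homeo F _ _ _ _ b' Hc HF F1 F2 F3 F4 Hb').
  assert (Hpath := fun d (H : adm_beta x1 x2 x3 x4 d) => proj1 H).
  assert (Hav := adm_beta_avoids2 x1 x2 x3 x4).
  assert (E0 : b 0 = b' 0) by (transitivity x3; [apply Hb|symmetry; apply Hb']).
  set (M := concat (reverse b) b').
  assert (PM : is_path M) by (apply reverse_concat_path; auto).
  assert (AvM : avoids2 x1 x2 M) by (apply avoids2_concat; [apply avoids2_reverse|]; auto).
  assert (M0 : M 0 = x4)
    by (unfold M; rewrite concat_0; unfold reverse; replace (1 - 0) with 1 by ring; apply Hb).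
  assert (M1 : M 1 = x4) by (unfold M; rewrite concat_1; apply Hb').
  destruct (chart_angle_loop _ _ _ _ M Hc PM AvM M0 M1) as [k [WM WMw]].
  assert (WFM := HO x1 x2 ltac:(apply Hc) ltac:(apply Hc) ltac:(apply Hc) M).
  specialize (WFM (conj PM (conj (eq_trans M0 (eq_sym M1))
    (conj (fun t Ht => proj1 (AvM t Ht)) (fun t Ht => proj2 (AvM t Ht))))) k WMw).
  rewrite F1, F2 in WFM.
  apply (wind_chart_angle x1 x2 x3 x4) in WFM; [|auto|rewrite M0; auto].
  unfold M in WFM. rewrite concat_map in WFM.
  assert (Ek := chart_angle_reverse_concat _ _ _ _ b b' _ _ _ Hc (Hpath _ Hb) (Hpath _ Hb')
    (Hav _ Hb) (Hav _ Hb') E0 Wc Wc' WM).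
  assert (EFk := chart_angle_reverse_concat _ _ _ _ (fun t => F (b t)) (fun t => F (b' t)) _ _ _ Hc
    (Hpath _ HFb) (Hpath _ HFb') (Hav _ HFb) (Hav _ HFb') ltac:(cbv beta; congruence) Wa Wa' WFM).
  lra.
Qed.

Lemma Rcal_chart_angle_diff F x1 x2 x3 x4 r b a c : four_points x1 x2 x3 x4 ->
  homeo_S2 F -> orient_pres F -> F x1 = x1 -> F x2 = x2 -> F x3 = x3 -> F x4 = x4 ->
  Rcal F x1 x2 x3 x4 r -> adm_beta x1 x2 x3 x4 b ->
  chart_angle x1 x2 x4 (fun t => F (b t)) a -> chart_angle x1 x2 x4 b c ->
  2 * PI * IZR r = a - c.
Proof.
  intros Hc HF HO F1 F2 F3 F4 HR Hb Wa Wc.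
  destruct (Rcal_chart_angle F _ _ _ _ r Hc HF F1 F2 F3 F4 HR)
    as [b' [Hb' [a' [c' [Wa' [Wc' E]]]]]].
  rewrite E. symmetry. apply (chart_angle_diff_beta_indep F x1 x2 x3 x4 b b'); auto.
Qed.

(** * Disjoint admissible paths *)

Definition comb (l m : R) (p q : pt) := vadd (vscale l p) (vscale m q).
Definition arc (p q : pt) (t : R) := normalize (comb (1 - t) t p q).

Lemma arc_path p q : (forall t, 0 <= t <= 1 -> comb (1 - t) t p q <> (0, 0, 0)) ->
  is_path (arc p q).
Proof.
  intros Hnz. apply is_path_of_coords; [intros; apply normalize_S2; auto|].
  intros t Ht. set (v := fun s => comb (1 - s) s p q).
  assert (Hlin : forall sel : pt -> R, (forall a b, sel (comb a b p q) = a * sel p + b * sel q) ->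
            continuity_pt (fun s => sel (v s)) t).
  { intros sel Hsel. apply cpt_ext with (fun s => (1 - s) * sel p + s * sel q).
    { intro s. unfold v. rewrite Hsel. reflexivity. }
    apply cpt_plus; apply cpt_mult; try apply cpt_const; try apply cpt_id.
    apply cpt_minus; [apply cpt_const|apply cpt_id]. }
  assert (Hx : continuity_pt (fun s => px (v s)) t)
    by (apply Hlin; intros; unfold comb; destruct_pts; ring).
  assert (Hy : continuity_pt (fun s => py (v s)) t)
    by (apply Hlin; intros; unfold comb; destruct_pts; ring).
  assert (Hz : continuity_pt (fun s => pz (v s)) t)
    by (apply Hlin; intros; unfold comb; destruct_pts; ring).
  assert (Hpos : dot (v t) (v t) > 0) by exact (dot_pos _ (Hnz t Ht)).
  assert (Hn : continuity_pt (fun s => / vnorm (v s)) t).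
  { apply cpt_inv;
      [|unfold vnorm; assert (sqrt (dot (v t) (v t)) > 0) by (apply sqrt_lt_R0; auto); lra].
    unfold vnorm. apply cpt_comp; [|apply continuity_pt_sqrt; lra].
    apply cpt_ext with (fun s => px (v s) * px (v s) + py (v s) * py (v s) + pz (v s) * pz (v s)).
    { intro s. rewrite dot_c. reflexivity. }
    repeat apply cpt_plus; apply cpt_mult; auto. }
  unfold arc, normalize. fold v.
  repeat split; [apply cpt_ext with (fun s => / vnorm (v s) * px (v s))
                |apply cpt_ext with (fun s => / vnorm (v s) * py (v s))
                |apply cpt_ext with (fun s => / vnorm (v s) * pz (v s))];
    try (intro; destruct_pts; reflexivity); apply cpt_mult; auto.
Qed.

Lemma arc_0 p q : on_S2 p -> arc p q 0 = p.
Proof.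
  intros H. unfold arc. replace (comb (1 - 0) 0 p q) with p
    by (unfold comb; destruct_pts; f_equal; [f_equal|]; ring).
  apply normalize_unit; auto.
Qed.
Lemma arc_1 p q : on_S2 q -> arc p q 1 = q.
Proof.
  intros H. unfold arc. replace (comb (1 - 1) 1 p q) with q
    by (unfold comb; destruct_pts; f_equal; [f_equal|]; ring).
  apply normalize_unit; auto.
Qed.
Lemma arc_join p w q : arc p w 1 = arc w q 0.
Proof. unfold arc. f_equal. unfold comb; destruct_pts; f_equal; [f_equal|]; ring. Qed.

Definition inspan (w p q : pt) := exists a b, w = comb a b p q.

Lemma comb_swap a b p q : comb a b p q = comb b a q p.
Proof. unfold comb. destruct_pts. f_equal; [f_equal|]; ring. Qed.

Lemma inspan_swap w p q : inspan w p q -> inspan w q p.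
Proof. intros [a [b E]]. exists b, a. rewrite E. apply comb_swap. Qed.

Lemma inspan_opp w p q : inspan (vscale (-1) w) p q -> inspan w p q.
Proof.
  intros [a [b E]]. exists (- a), (- b).
  replace w with (vscale (-1) (vscale (-1) w)) by (destruct_pts; f_equal; [f_equal|]; ring).
  rewrite E. unfold comb. destruct_pts. f_equal; [f_equal|]; ring.
Qed.

Lemma comb_nonzero w p q a b : ~ inspan w p q -> on_S2 p -> (a <> 0 \/ b <> 0) ->
  comb a b p w <> (0, 0, 0).
Proof.
  intros Hn Hp Hab E. destruct (Req_dec b 0) as [Hb|Hb].
  - subst b. destruct Hab as [Ha|Ha]; [|lra].
    assert (Hp0 : p = (0, 0, 0)).
    { apply pt_ext; destruct_pts; injection E; intros; apply Rmult_eq_reg_l with a; lra. }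
    rewrite Hp0 in Hp. unfold on_S2, dot in Hp. simpl in Hp. lra.
  - apply Hn. exists (- a / b), 0. unfold comb in *. destruct_pts. injection E; intros.
    f_equal; [f_equal|]; apply Rmult_eq_reg_l with b; auto; field_simplify; auto; lra.
Qed.

(* Unless both cone coefficients of [w] vanish, solving for [w] puts it in
   the span of [xi] and [xj]. *)
Lemma cone_disjoint xi xj w l m l' m' c : on_S2 xi -> on_S2 xj -> xi <> xj ->
  ~ inspan w xi xj -> 0 <= l -> 0 <= m -> l + m = 1 -> 0 <= l' -> 0 <= m' -> l' + m' = 1 ->
  c > 0 -> comb l m xi w <> vscale c (comb l' m' xj (vscale (-1) w)).
Proof.
  intros Hi Hj Hij Hn Hl Hm Hlm Hl' Hm' Hlm' Hc E.
  destruct xi as [[i1 i2] i3]; destruct xj as [[j1 j2] j3]; destruct w as [[w1 w2] w3].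
  destruct (Req_dec (m + c * m') 0) as [Z|Z].
  - assert (m = 0) by nra. assert (m' = 0) by nra. subst m m'.
    replace l with 1 in E by lra. replace l' with 1 in E by lra.
    unfold on_S2, comb, dot, vadd, vscale in *. simpl in *. injection E as E1 E2 E3.
    assert (i1 = c * j1) by lra. assert (i2 = c * j2) by lra. assert (i3 = c * j3) by lra.
    subst i1 i2 i3.
    assert (c * c = 1).
    { replace (c * j1 * (c * j1) + c * j2 * (c * j2) + c * j3 * (c * j3))
        with (c * c * (j1 * j1 + j2 * j2 + j3 * j3)) in Hi by ring.
      rewrite Hj in Hi. lra. }
    assert (c = 1) by nra. subst c. apply Hij. f_equal; [f_equal|]; ring.
  - apply Hn. exists (- l / (m + c * m')), (c * l' / (m + c * m')).
    unfold comb, vadd, vscale in *. simpl in *. injection E as E1 E2 E3.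
    f_equal; [f_equal|]; apply Rmult_eq_reg_l with (m + c * m'); auto; field_simplify; auto; lra.
Qed.

Definition broken_arc (p w q : pt) := concat (arc p w) (arc w q).

Lemma broken_arc_path p w q r s : on_S2 p -> on_S2 q -> ~ inspan w p r -> ~ inspan w q s ->
  is_path (broken_arc p w q) /\ broken_arc p w q 0 = p /\ broken_arc p w q 1 = q.
Proof.
  intros Hp Hq Np Nq.
  assert (Hnz : forall t, 0 <= t <= 1 -> (1 - t) <> 0 \/ t <> 0)
    by (intros t Ht; destruct (Req_dec t 0); [left|right]; lra).
  unfold broken_arc. rewrite concat_0, concat_1, arc_0, arc_1 by auto.
  split; [|split; reflexivity].
  apply concat_path; [| |apply arc_join]; apply arc_path; intros t Ht.
  - apply (comb_nonzero w p r); auto.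
  - rewrite comb_swap. apply (comb_nonzero w q s); auto. destruct (Hnz t Ht); auto.
Qed.

(* The moment curve [k |-> (1, k, k^2)] meets every plane through the origin
   in at most two points; off these, it avoids the spans of the pairs. *)
Definition moment (k : R) : pt := (1, k, k * k).

Lemma quadratic_three_roots n1 n2 n3 k1 k2 k3 : k1 <> k2 -> k1 <> k3 -> k2 <> k3 ->
  n1 + n2 * k1 + n3 * (k1 * k1) = 0 -> n1 + n2 * k2 + n3 * (k2 * k2) = 0 ->
  n1 + n2 * k3 + n3 * (k3 * k3) = 0 -> n1 = 0 /\ n2 = 0 /\ n3 = 0.
Proof.
  intros D12 D13 D23 E1 E2 E3.
  assert (A : n2 + n3 * (k1 + k2) = 0) by (apply Rmult_eq_reg_l with (k1 - k2); [nra|lra]).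
  assert (B : n2 + n3 * (k1 + k3) = 0) by (apply Rmult_eq_reg_l with (k1 - k3); [nra|lra]).
  assert (C : n3 = 0) by (apply Rmult_eq_reg_l with (k2 - k3); [nra|lra]).
  subst n3. split; [|split]; auto; nra.
Qed.

Lemma cross_zero_unit p q : on_S2 p -> on_S2 q -> cross p q = (0, 0, 0) ->
  p = q \/ q = vscale (-1) p.
Proof.
  unfold on_S2. intros Hp Hq Hx.
  assert (Hd : dot p q * dot p q = 1).
  { replace (dot p q * dot p q) with (dot p p * dot q q - dot (cross p q) (cross p q))
      by (destruct_pts; ring).
    rewrite Hp, Hq, Hx. unfold dot. simpl. ring. }
  destruct (Req_dec (dot p q) 1) as [E|E]; [left|right]; apply NNPP; intro Hne.
  - assert (H := dot_vsub_pos p q Hne). rewrite dot_vsub, !(dot_sym _ (vsub p q)),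
      !dot_vsub, (dot_sym q p), Hp, Hq in H. lra.
  - assert (Hm : dot p q = -1) by nra.
    assert (H := dot_vsub_pos q (vscale (-1) p) Hne).
    replace (dot (vsub q (vscale (-1) p)) (vsub q (vscale (-1) p)))
      with (dot q q + 2 * dot p q + dot p p) in H by (destruct_pts; ring). lra.
Qed.

Lemma moment_curve_span_three p q k1 k2 k3 : on_S2 p -> on_S2 q -> p <> q ->
  k1 <> k2 -> k1 <> k3 -> k2 <> k3 ->
  inspan (moment k1) p q -> inspan (moment k2) p q -> inspan (moment k3) p q -> False.
Proof.
  intros Hp Hq Hpq D12 D13 D23 I1 I2 I3.
  assert (Hroot : forall k, inspan (moment k) p q ->
            px (cross p q) + py (cross p q) * k + pz (cross p q) * (k * k) = 0).
  { intros k [a [b E]].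
    transitivity (dot (cross p q) (moment k)); [unfold moment; destruct_pts; ring|].
    rewrite E. unfold comb. destruct_pts. ring. }
  destruct (quadratic_three_roots _ _ _ k1 k2 k3 D12 D13 D23 (Hroot _ I1) (Hroot _ I2) (Hroot _ I3))
    as [Z1 [Z2 Z3]].
  destruct (cross_zero_unit p q Hp Hq) as [|Eq]; [apply pt_ext; auto|congruence|].
  assert (Hline : forall k, inspan (moment k) p q -> k * px p = py p /\ px p <> 0).
  { intros k [a [b E]]. rewrite Eq in E.
    assert (E1 : 1 = (a - b) * px p)
      by (apply (f_equal px) in E; unfold moment, comb in E; destruct_pts; lra).
    assert (E2 : k = (a - b) * py p)
      by (apply (f_equal py) in E; unfold moment, comb in E; destruct_pts; lra).
    split; [rewrite E2; transitivity (py p * ((a - b) * px p)); [ring|rewrite <- E1; ring]|].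
    intro Z. rewrite Z in E1. lra. }
  destruct (Hline _ I1) as [L1 P0]. destruct (Hline _ I2) as [L2 _].
  apply D12. apply Rmult_eq_reg_r with (px p); auto. lra.
Qed.

Lemma at_most_two (P : R -> Prop) :
  (forall k1 k2 k3, P k1 -> P k2 -> P k3 -> k1 = k2 \/ k1 = k3 \/ k2 = k3) ->
  exists r1 r2, forall k, P k -> k = r1 \/ k = r2.
Proof.
  intros H. destruct (classic (exists k, P k)) as [[r1 H1]|N].
  - destruct (classic (exists k, P k /\ k <> r1)) as [[r2 [H2 N2]]|N'].
    + exists r1, r2. intros k Hk.
      destruct (H r1 r2 k H1 H2 Hk) as [E|[E|E]]; [congruence|left; auto|right; auto].
    + exists r1, r1. intros k Hk. left. apply NNPP. intro. apply N'. eauto.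
  - exists 0, 0. intros k Hk. exfalso. eauto.
Qed.

Lemma moment_curve_span_finite p q : on_S2 p -> on_S2 q -> p <> q ->
  exists r1 r2, forall k, inspan (moment k) p q -> k = r1 \/ k = r2.
Proof.
  intros Hp Hq Hpq. apply at_most_two. intros k1 k2 k3 H1 H2 H3.
  destruct (Req_dec k1 k2); auto. destruct (Req_dec k1 k3); auto. destruct (Req_dec k2 k3); auto.
  exfalso. apply (moment_curve_span_three p q k1 k2 k3); auto.
Qed.

Lemma generic_direction x1 x2 x3 x4 : four_points x1 x2 x3 x4 -> exists w,
  ~ inspan w x1 x3 /\ ~ inspan w x1 x4 /\ ~ inspan w x2 x3 /\ ~ inspan w x2 x4.
Proof.
  intros (H1 & H2 & H3 & H4 & D12 & D13 & D14 & D23 & D24 & D34).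
  destruct (moment_curve_span_finite x1 x3 H1 H3 D13) as [r1 [r2 R12]].
  destruct (moment_curve_span_finite x1 x4 H1 H4 D14) as [r3 [r4 R34]].
  destruct (moment_curve_span_finite x2 x3 H2 H3 D23) as [r5 [r6 R56]].
  destruct (moment_curve_span_finite x2 x4 H2 H4 D24) as [r7 [r8 R78]].
  set (k := 1 + Rabs r1 + Rabs r2 + Rabs r3 + Rabs r4 + Rabs r5 + Rabs r6 + Rabs r7 + Rabs r8).
  assert (Hk : forall r, r = r1 \/ r = r2 \/ r = r3 \/ r = r4 \/ r = r5 \/ r = r6 \/ r = r7
                 \/ r = r8 -> r < k).
  { intros r Hr. unfold k.
    assert (A := Rle_abs r). assert (Ha := Rabs_pos r1). assert (Hb := Rabs_pos r2).
    assert (Hc := Rabs_pos r3). assert (Hd := Rabs_pos r4). assert (He := Rabs_pos r5).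
    assert (Hf := Rabs_pos r6). assert (Hg := Rabs_pos r7). assert (Hh := Rabs_pos r8).
    repeat (destruct Hr as [Hr|Hr]; [rewrite Hr in A; lra|]). rewrite Hr in A. lra. }
  exists (moment k). repeat split; intro I;
    [destruct (R12 k I)|destruct (R34 k I)|destruct (R56 k I)|destruct (R78 k I)];
    assert (k < k) by (apply Hk; tauto); lra.
Qed.

Lemma broken_arcs_disjoint x1 x2 x3 x4 w : four_points x1 x2 x3 x4 ->
  ~ inspan w x1 x3 -> ~ inspan w x1 x4 -> ~ inspan w x2 x3 -> ~ inspan w x2 x4 ->
  forall s t, 0 <= s <= 1 -> 0 <= t <= 1 ->
    broken_arc x3 (vscale (-1) w) x4 s <> broken_arc x1 w x2 t.
Proof.
  intros Hc N13 N14 N23 N24 s t Hs Ht E.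
  destruct Hc as (H1 & H2 & H3 & H4 & D12 & D13 & D14 & D23 & D24 & D34).
  assert (N31 : ~ inspan (vscale (-1) w) x3 x1)
    by (intro I; apply N13, inspan_swap, inspan_opp; auto).
  assert (N41 : ~ inspan (vscale (-1) w) x4 x1)
    by (intro I; apply N14, inspan_swap, inspan_opp; auto).
  assert (Hnz : forall t, 0 <= t <= 1 -> (1 - t) <> 0 \/ t <> 0)
    by (intros t' Ht'; destruct (Req_dec t' 0); [left|right]; lra).
  assert (Hnz' : forall t, 0 <= t <= 1 -> t <> 0 \/ (1 - t) <> 0)
    by (intros t' Ht'; destruct (Req_dec t' 0); [right|left]; lra).
  set (w' := vscale (-1) w) in *.
  assert (Z1 : forall t, 0 <= t <= 1 -> comb (1 - t) t x1 w <> (0, 0, 0))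
    by (intros; apply (comb_nonzero w x1 x3); auto).
  assert (Z2 : forall t, 0 <= t <= 1 -> comb (1 - t) t w x2 <> (0, 0, 0))
    by (intros; rewrite comb_swap; apply (comb_nonzero w x2 x3); auto).
  assert (Z3 : forall t, 0 <= t <= 1 -> comb (1 - t) t x3 w' <> (0, 0, 0))
    by (intros; apply (comb_nonzero w' x3 x1); auto).
  assert (Z4 : forall t, 0 <= t <= 1 -> comb (1 - t) t w' x4 <> (0, 0, 0))
    by (intros; rewrite comb_swap; apply (comb_nonzero w' x4 x1); auto).
  assert (VN : forall A, A <> (0, 0, 0) -> vnorm A > 0)
    by (intros A HA; apply sqrt_lt_R0, dot_pos; auto).
  unfold broken_arc, concat, arc in E.
  destruct (Rle_dec s (1/2)); destruct (Rle_dec t (1/2)); symmetry in E; apply normalize_eq in E;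
    try (apply Z1; lra); try (apply Z2; lra); try (apply Z3; lra); try (apply Z4; lra).
  - revert E. apply (cone_disjoint x1 x3 w); auto; try lra.
    apply Rdiv_lt_0_compat; apply VN; [apply Z1|apply Z3]; lra.
  - rewrite (comb_swap _ _ w x2) in E. revert E. apply (cone_disjoint x2 x3 w); auto; try lra.
    apply Rdiv_lt_0_compat; apply VN; [rewrite comb_swap; apply Z2|apply Z3]; lra.
  - rewrite (comb_swap _ _ w' x4) in E. revert E. apply (cone_disjoint x1 x4 w); auto; try lra.
    apply Rdiv_lt_0_compat; apply VN; [apply Z1|rewrite comb_swap; apply Z4]; lra.
  - rewrite (comb_swap _ _ w x2), (comb_swap _ _ w' x4) in E. revert E.
    apply (cone_disjoint x2 x4 w); auto; try lra.
    apply Rdiv_lt_0_compat; apply VN;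
      [rewrite comb_swap; apply Z2|rewrite comb_swap; apply Z4]; lra.
Qed.

Lemma disjoint_adm_paths x1 x2 x3 x4 : four_points x1 x2 x3 x4 -> exists al be,
  adm_alpha x1 x2 x3 x4 al /\ adm_beta x1 x2 x3 x4 be /\
  forall s t, unit_int s -> unit_int t -> be s <> al t.
Proof.
  intros Hc. destruct (generic_direction _ _ _ _ Hc) as [w [N13 [N14 [N23 N24]]]].
  assert (D := broken_arcs_disjoint _ _ _ _ _ Hc N13 N14 N23 N24).
  destruct Hc as (H1 & H2 & H3 & H4 & D12 & D13 & D14 & D23 & D24 & D34).
  destruct (broken_arc_path x1 w x2 x3 x3 H1 H2 N13 N23) as [Pal [Al0 Al1]].
  destruct (broken_arc_path x3 (vscale (-1) w) x4 x1 x1 H3 H4) as [Pbe [Be0 Be1]];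
    try (intro I; apply inspan_swap, inspan_opp in I; auto).
  exists (broken_arc x1 w x2), (broken_arc x3 (vscale (-1) w) x4).
  split; [|split; [|exact D]].
  - split; [auto|split; [auto|split; [auto|split]]]; intros t Ht E;
      [apply (D 0 t)|apply (D 1 t)]; try exact Ht; try lra; congruence.
  - split; [auto|split; [auto|split; [auto|split]]]; intros t Ht E;
      [apply (D t 0)|apply (D t 1)]; try exact Ht; try lra; congruence.
Qed.

(** * Existence and additivity of [R_f] *)

(* The witness for [delta] is the reverse of a [beta] disjoint from [alpha]. *)
Lemma int_number_exists x1 x2 x3 x4 al be g : four_points x1 x2 x3 x4 ->
  adm_beta x1 x2 x3 x4 be -> (forall s t, unit_int s -> unit_int t -> be s <> al t) ->
  is_path g -> g 0 = x3 -> g 1 = x4 -> avoids2 x1 x2 g ->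
  exists k, int_number x1 x2 x3 x4 al g k.
Proof.
  intros Hc Hb Hd Pg G0 G1 Ag.
  assert (Av := adm_beta_avoids2 _ _ _ _ _ Hb).
  destruct Hb as [Pb [Eb0 [Eb1 _]]].
  set (L := concat (reverse be) g).
  assert (PL : is_path L) by (apply reverse_concat_path; congruence).
  assert (AL : avoids2 x1 x2 L) by (apply avoids2_concat; [apply avoids2_reverse|]; auto).
  assert (L0 : L 0 = x4)
    by (unfold L; rewrite concat_0; unfold reverse; replace (1 - 0) with 1 by ring; auto).
  assert (L1 : L 1 = x4) by (unfold L; rewrite concat_1; auto).
  destruct (chart_angle_loop _ _ _ _ L Hc PL AL L0 L1) as [k [_ Wk]].
  exists k, (reverse be). split; [apply reverse_path; auto|]. unfold reverse.
  replace (1 - 0) with 1 by ring. replace (1 - 1) with 0 by ring.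
  repeat split; auto. intros s t Hs Ht. apply Hd; auto. unfold unit_int in *; lra.
Qed.

Lemma Rcal_exists F x1 x2 x3 x4 : four_points x1 x2 x3 x4 -> homeo_S2 F ->
  F x1 = x1 -> F x2 = x2 -> F x3 = x3 -> F x4 = x4 -> exists r, Rcal F x1 x2 x3 x4 r.
Proof.
  intros Hc HF F1 F2 F3 F4.
  destruct (disjoint_adm_paths _ _ _ _ Hc) as [al [be [Ha [Hb Hd]]]].
  assert (HFb := adm_beta_homeo F _ _ _ _ be Hc HF F1 F2 F3 F4 Hb).
  assert (Hint : forall g, adm_beta x1 x2 x3 x4 g -> exists k, int_number x1 x2 x3 x4 al g k).
  { intros g Hg. assert (Ag := adm_beta_avoids2 _ _ _ _ _ Hg).
    destruct Hg as [Pg [G0 [G1 _]]]. apply (int_number_exists x1 x2 x3 x4 al be g); auto. }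
  destruct (Hint _ HFb) as [k1 I1]. destruct (Hint _ Hb) as [k2 I2].
  exists (k1 - k2)%Z, al, be. split; [auto|split; [auto|]]. exists k1, k2. auto.
Qed.

Theorem proposition4 (f g : pt -> pt) (x1 x2 x3 x4 : pt) :
  homeo_S2 f -> orient_pres f -> homeo_S2 g -> orient_pres g ->
  on_S2 x1 -> on_S2 x2 -> on_S2 x3 -> on_S2 x4 ->
  x1 <> x2 -> x1 <> x3 -> x1 <> x4 -> x2 <> x3 -> x2 <> x4 -> x3 <> x4 ->
  f x1 = x1 -> f x2 = x2 -> f x3 = x3 -> f x4 = x4 ->
  g x1 = x1 -> g x2 = x2 -> g x3 = x3 -> g x4 = x4 ->
  (exists r : Z, Rcal (fun x => f (g x)) x1 x2 x3 x4 r) /\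
  (exists r : Z, Rcal f x1 x2 x3 x4 r) /\
  (exists r : Z, Rcal g x1 x2 x3 x4 r) /\
  forall r r1 r2 : Z,
    Rcal (fun x => f (g x)) x1 x2 x3 x4 r ->
    Rcal f x1 x2 x3 x4 r1 -> Rcal g x1 x2 x3 x4 r2 ->
    r = (r1 + r2)%Z.
Proof.
  intros Hf Of Hg Og H1 H2 H3 H4 D12 D13 D14 D23 D24 D34 f1 f2 f3 f4 g1 g2 g3 g4.
  assert (Hc : four_points x1 x2 x3 x4) by (repeat split; auto).
  assert (Hfg : homeo_S2 (fun x => f (g x))) by (apply homeo_comp; auto).
  split; [apply Rcal_exists; auto; congruence|].
  split; [apply Rcal_exists; auto|].
  split; [apply Rcal_exists; auto|].
  intros r r1 r2 R0 R1 R2.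
  destruct (Rcal_chart_angle _ _ _ _ _ r Hc Hfg ltac:(congruence) ltac:(congruence)
    ltac:(congruence) ltac:(congruence) R0) as [b [Hb [afg [c [Wfg [Wb E0]]]]]].
  assert (Hgb := adm_beta_homeo g _ _ _ _ b Hc Hg g1 g2 g3 g4 Hb).
  destruct (chart_angle_exists x1 x2 x3 x4 (fun t => g (b t)) Hc ltac:(apply Hgb)
    (adm_beta_avoids2 _ _ _ _ _ Hgb)) as [ag Wg].
  assert (E1 := Rcal_chart_angle_diff f _ _ _ _ r1 _ _ _ Hc Hf Of f1 f2 f3 f4 R1 Hgb Wfg Wg).
  assert (E2 := Rcal_chart_angle_diff g _ _ _ _ r2 _ _ _ Hc Hg Og g1 g2 g3 g4 R2 Hb Wg Wb).
  assert (HPI := PI_RGT_0).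
  apply eq_IZR. rewrite plus_IZR. apply Rmult_eq_reg_l with (2 * PI); lra.
Qed.
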